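(* Let $e\ge 0$ and $m\ge 1$ be integers. The set of tree-decorated maps $(M,t)$ such that $M$ has $e+m$ edges, $t$ has $m$ edges, and the root edge of $M$ lies on $t$, is in bijection with the Cartesian product $\mathsf{PPT}_m\times \mathcal{S}_{e,m}$. Here $\mathcal{S}_{e,m}$ denotes the set of maps with a simple boundary of length $2m$ having $e$ interior edges, i.e. $e$ edges not on the boundary. Under this bijection, the plane-tree component is the decorating tree $t$, with the cyclic orders inherited from $M$ and rooted at the root edge of $M$.
   Context: A (rooted planar) map is a finite connected graph (loops and multiple edges allowed) embedded in the sphere, considered up to orientation-preserving homeomorphism, together with a distinguished oriented edge, the root edge. The root face is the face to the left of the root edge. A plane tree is a map with a single face; $\mathsf{PPT}_m$ denotes the set of plane trees with $m$ edges. A map with a simple boundary of length $2m$ is a rooted map whose root face (the external face) has degree $2m$ and whose boundary is a simple cycle, i.e. the $2m$ oriented edges having the external face on their left form a simple closed curve through $2m$ distinct vertices. A tree-decorated map is a pair $(M,t)$ where $M$ is a rooted map and $t$ is a subgraph of $M$ that is a tree. *)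

(* Rooted planar maps encoded combinatorially as rotation
   systems on a labelled dart set 'I_(2*n) (n = number of edges); statements
   are about isomorphism classes of such labelled objects. *)
From mathcomp Require Import all_boot all_fingroup.
Set Implicit Arguments. Unset Strict Implicit. Unset Printing Implicit Defensive.

Section Generic.
Variable D : finType.

(* alpha: fixed-point-free involution (pairs the two orientations of an edge) *)
Definition invol_fpf (a : {perm D}) : Prop :=
  forall x, a x != x /\ a (a x) = x.

Definition mstep (s a : {perm D}) : rel D :=
  fun x y => (y == s x) || (y == a x).

Definition mconnected (s a : {perm D}) : Prop :=
  forall x y, connect (mstep s a) x y.

(* sigma: counterclockwise rotation of darts around their origin vertex.
   Face permutation: phi x = sigma^-1 (alpha x) is the next dart of the face
   lying to the left of x (mathcomp: (p * q) x = q (p x)). *)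
Definition phi (s a : {perm D}) : {perm D} := (a * s^-1)%g.

Definition nverts (s : {perm D}) : nat := #|porbits s|.
Definition nfaces (s a : {perm D}) : nat := #|porbits (phi s a)|.
End Generic.

Record premap (n : nat) := Premap {
  sigma : {perm 'I_(2 * n)};
  alpha : {perm 'I_(2 * n)};
  root  : 'I_(2 * n) }.

(* rooted planar map with n edges: connected, genus 0 (Euler: V - E + F = 2) *)
Definition is_map n (M : premap n) : Prop :=
  [/\ invol_fpf (alpha M), mconnected (sigma M) (alpha M)
    & nverts (sigma M) + nfaces (sigma M) (alpha M) = n + 2].

Definition iso_map n (M N : premap n) : Prop :=
  exists p : {perm 'I_(2 * n)},
    [/\ forall x, p (sigma M x) = sigma N (p x),
        forall x, p (alpha M x) = alpha N (p x)
      & p (root M) = root N].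

Definition is_plane_tree n (M : premap n) : Prop :=
  is_map M /\ nfaces (sigma M) (alpha M) = 1.

Definition root_face n (M : premap n) : {set 'I_(2 * n)} :=
  porbit (phi (sigma M) (alpha M)) (root M).

(* map with a simple boundary of length 2m: root face has degree 2m, its darts
   start at pairwise distinct vertices and use pairwise distinct edges. *)
Definition is_simple_boundary_map (m : nat) n (M : premap n) : Prop :=
  [/\ is_map M, #|root_face M| = 2 * m,
      {in root_face M &, injective (fun x => porbit (sigma M) x)}
    & forall x, x \in root_face M -> alpha M x \notin root_face M].

(* tree-decorated maps: a map together with the dart set of the tree *)
Record tdmap (n : nat) := TDMap {
  tmap : premap n;
  tset : {set 'I_(2 * n)} }.

Definition tstep n (M : premap n) (T : {set 'I_(2 * n)}) : rel 'I_(2 * n) :=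
  fun x y => [&& x \in T, y \in T &
              (y == alpha M x) || (y \in porbit (sigma M) x)].

(* (M,T): M a map with n edges, T the darts of a subtree with m edges
   (connected, #vertices = #edges + 1), containing the root edge. *)
Definition valid_tdm (m : nat) n (X : tdmap n) : Prop :=
  let M := tmap X in let T := tset X in
  is_map M /\
  [/\ (forall x, x \in T -> alpha M x \in T),
      #|T| = 2 * m,
      (forall x y, x \in T -> y \in T -> connect (tstep M T) x y),
      #|[set porbit (sigma M) x | x in T]| = m + 1
    & root M \in T].

Definition iso_tdm n (X Y : tdmap n) : Prop :=
  exists p : {perm 'I_(2 * n)},
    [/\ forall x, p (sigma (tmap X) x) = sigma (tmap Y) (p x),
        forall x, p (alpha (tmap X) x) = alpha (tmap Y) (p x),
        p (root (tmap X)) = root (tmap Y)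
      & forall x, (p x \in tset Y) = (x \in tset X)].

(* P (with m edges) is the tree T of M with the cyclic orders inherited from M
   (rotation = first dart of T met when turning around the vertex in M),
   rooted at the root dart of M; g identifies the darts of P with T. *)
Definition induced_tree n m (M : premap n) (T : {set 'I_(2 * n)})
    (P : premap m) : Prop :=
  exists g : 'I_(2 * m) -> 'I_(2 * n),
    [/\ injective g,
        (forall x, x \in T <-> exists i, g i = x),
        g (root P) = root M,
        (forall i, g (alpha P i) = alpha M (g i))
      & (forall i, exists k, [/\ 0 < k, g (sigma P i) = (sigma M ^+ k)%g (g i)
           & forall j, 0 < j < k -> (sigma M ^+ j)%g (g i) \notin T])].

From Pilot Require Import Defs.
From mathcomp Require Import all_boot all_fingroup zify.
Set Implicit Arguments. Unset Strict Implicit. Unset Printing Implicit Defensive.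

(* The bijection cuts the map M open along the tree T.  The plane tree P keeps
   the darts of T, the involution of M, and as rotation the "first return" of
   the rotation of M into T.  The map S has the darts of M plus one new dart
   nu i for every dart i of P; the new darts bound a hole whose contour is the
   unique face of P.  All the combinatorics is captured by one relation,
   [cutrel], between (M,T), P and S, given by three dart embeddings and local
   rules for the rotations and involutions.
   The theorem follows: cutting is well defined on isomorphism classes, injective
   (by lifting), surjective (by gluing) and produces the induced tree. *)

Section Orbits.
Variable D : finType.
Implicit Types s : {perm D}.

Lemma iter_perm_porbit s x n : iter n s x \in porbit s x.
Proof. by rewrite -permX mem_porbit. Qed.

Lemma porbit_iter_ltP s x y :
  reflect (exists2 i, i < #|porbit s x| & y = iter i s x) (y \in porbit s x).
Proof.
apply: (iffP idP).
  by rewrite porbit_traject => /trajectP [i Hi ->]; exists i.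
by case=> i _ ->; apply: iter_perm_porbit.
Qed.

Lemma porbit_iterP s x y :
  reflect (exists i, y = iter i s x) (y \in porbit s x).
Proof.
apply: (iffP idP); first by case/porbit_iter_ltP=> i _ ->; exists i.
by case=> i ->; apply: iter_perm_porbit.
Qed.

Lemma iter_cycle_mod (f : D -> D) x N n :
  iter N f x = x -> iter n f x = iter (n %% N) f x.
Proof.
move=> HN; have HK : forall q, iter (q * N) f x = x.
  by elim=> [//|q IH]; rewrite mulSn iterD IH HN.
by rewrite {1}(divn_eq n N) addnC iterD HK.
Qed.

Lemma iter_mod s x n : iter n s x = iter (n %% #|porbit s x|) s x.
Proof. exact/iter_cycle_mod/iter_porbit. Qed.

Lemma iter_inj_lt s x i j : i < #|porbit s x| -> j < #|porbit s x| ->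
  iter i s x = iter j s x -> i = j.
Proof.
move=> Hi Hj E.
have U := uniq_traject_porbit s x.
apply/eqP; rewrite -(nth_uniq x _ _ U) ?size_traject //.
by rewrite !nth_traject // E.
Qed.

Lemma iter_perm_inj s n : injective (iter n s).
Proof. elim: n => [//|n IH] x y /=; by move/perm_inj/IH. Qed.

Lemma permV_as_iter s x : exists n, (s^-1)%g x = iter n s x.
Proof.
exists (#|porbit s x|).-1.
apply: (@perm_inj _ s); rewrite permKV -iterS prednK ?iter_porbit //.
by rewrite lt0n card_porbit_neq0.
Qed.

Lemma porbit_iter s x n : porbit s (iter n s x) = porbit s x.
Proof. by rewrite -permX porbit_perm. Qed.

Lemma porbit_step s x : porbit s (s x) = porbit s x.
Proof. exact: (porbit_iter s x 1). Qed.

Lemma porbitsT s : porbits s = porbit s @: setT.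
Proof. by apply/setP=> O; apply/imsetP/imsetP => -[x _ ->]; exists x. Qed.

Lemma mem_single_porbit s i j : #|porbits s| = 1 -> j \in porbit s i.
Proof.
move=> H; rewrite -eq_porbit_mem; apply/eqP.
move/eqP: H => /cards1P [O EO].
have : porbit s j \in porbits s by apply: imset_f.
have : porbit s i \in porbits s by apply: imset_f.
by rewrite EO !inE => /eqP -> /eqP ->.
Qed.

Lemma porbit_closed (U : {set D}) s : (forall u, u \in U -> s u \in U) ->
  forall u y, u \in U -> y \in porbit s u -> y \in U.
Proof.
move=> HU u y uU /porbit_iterP [n ->]; elim: n => [//|n IH]; by rewrite iterS HU.
Qed.

End Orbits.

(* Maps commuting with permutations ("equivariant" maps) carry orbits to
   orbits; this is how orbit counts are compared between the three maps. *)
Section Equivariant.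
Variables (D D' : finType) (s : {perm D}) (s' : {perm D'}).

Lemma iter_equivariant (f : D -> D') :
  (forall x, f (s x) = s' (f x)) -> forall n x, f (iter n s x) = iter n s' (f x).
Proof. by move=> H; elim=> [//|n IH] x; rewrite !iterS H IH. Qed.

Lemma porbit_equivariant (f : D -> D') x :
  (forall x, f (s x) = s' (f x)) -> f @: porbit s x = porbit s' (f x).
Proof.
move=> H; apply/setP=> y; apply/imsetP/porbit_iterP.
  by case=> z /porbit_iterP [n ->] ->; exists n; apply: iter_equivariant.
by case=> n ->; exists (iter n s x); [apply: iter_perm_porbit | rewrite (iter_equivariant H)].
Qed.

Lemma equivariant_agree (f g : D -> D') x :
  (forall x, f (s x) = s' (f x)) -> (forall x, g (s x) = s' (g x)) ->
  f x = g x -> forall y, y \in porbit s x -> f y = g y.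
Proof.
move=> Hf Hg E y /porbit_iterP [n ->].
by rewrite (iter_equivariant Hf) (iter_equivariant Hg) E.
Qed.

Lemma card_porbits_bij (f : D -> D') :
  bijective f -> (forall x, f (s x) = s' (f x)) -> #|porbits s'| = #|porbits s|.
Proof.
move=> Hb H.
have fi : injective f by apply: bij_inj.
have -> : porbits s' = (fun A : {set D} => f @: A) @: porbits s.
  apply/setP=> O; apply/imsetP/imsetP.
    case=> y _ ->; case: Hb => g fg gf.
    exists (porbit s (g y)); first by apply: imset_f.
    by rewrite (porbit_equivariant _ H) gf.
  by case=> A /imsetP [x _ ->] ->; exists (f x) => //; rewrite (porbit_equivariant _ H).
by rewrite card_imset //; apply: imset_inj.
Qed.

End Equivariant.

Lemma card_porbits_union (D A B : finType) (p : {perm D}) (pa : {perm A})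
    (pb : {perm B}) (i : A -> D) (j : B -> D) :
  injective i -> injective j -> (forall a b, i a != j b) ->
  (forall z, (exists a, z = i a) \/ (exists b, z = j b)) ->
  (forall a, p (i a) = i (pa a)) -> (forall b, p (j b) = j (pb b)) ->
  #|porbits p| = #|porbits pa| + #|porbits pb|.
Proof.
move=> ii ji dij cov Hi Hj.
have Oi a : i @: porbit pa a = porbit p (i a).
  exact: porbit_equivariant (fun a => esym (Hi a)).
have Oj b : j @: porbit pb b = porbit p (j b).
  exact: porbit_equivariant (fun b => esym (Hj b)).
set OA := (fun X : {set A} => i @: X) @: porbits pa.
set OB := (fun X : {set B} => j @: X) @: porbits pb.
have -> : porbits p = OA :|: OB.
  apply/setP=> O; rewrite inE; apply/imsetP/orP.
    case=> z _ ->; case: (cov z) => [[a ->]|[b ->]].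
      by left; apply/imsetP; exists (porbit pa a); [apply: imset_f | rewrite Oi].
    by right; apply/imsetP; exists (porbit pb b); [apply: imset_f | rewrite Oj].
  case=> /imsetP [X /imsetP [x _ ->] ->].
    by exists (i x) => //; rewrite Oi.
  by exists (j x) => //; rewrite Oj.
have disjAB : OA :&: OB = set0.
  apply/setP=> O; rewrite !inE; apply/negbTE/negP.
  case/andP=> /imsetP [X /imsetP [x _ ->] ->] /imsetP [Y /imsetP [y _ ->]] E.
  have : i x \in j @: porbit pb y by rewrite -E; apply: imset_f; apply: porbit_id.
  by case/imsetP=> b _ /eqP; rewrite (negbTE (dij _ _)).
by rewrite cardsU disjAB cards0 subn0 (card_imset _ (imset_inj ii))
  (card_imset _ (imset_inj ji)).
Qed.

Lemma card_imset_le (A X Y : finType) (F1 : A -> X) (F2 : A -> Y) (S : {set A}) :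
  (forall i j, F2 i = F2 j -> F1 i = F1 j) -> #|F1 @: S| <= #|F2 @: S|.
Proof.
move=> HF; case: (set_0Vmem S) => [->|[i0 i0S]]; first by rewrite !imset0 !cards0.
pose G y := F1 (odflt i0 [pick i in S | F2 i == y]).
have -> : F1 @: S = G @: (F2 @: S).
  apply/setP=> x; apply/imsetP/imsetP.
    case=> i iS ->; exists (F2 i); first exact: imset_f.
    rewrite /G; case: pickP => [i' /andP [_ /eqP E]|/(_ i)]; first by rewrite (HF _ _ E).
    by rewrite iS eqxx.
  case=> y /imsetP [i iS ->] ->; rewrite /G; case: pickP => [i' /andP [i'S _]|_].
    by exists i'.
  by exists i0.
exact: leq_imset_card.
Qed.

Lemma card_imset_equiv (A X Y : finType) (F1 : A -> X) (F2 : A -> Y) (S : {set A}) :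
  (forall i j, (F1 i == F1 j) = (F2 i == F2 j)) -> #|F1 @: S| = #|F2 @: S|.
Proof.
move=> HF; apply/eqP; rewrite eqn_leq; apply/andP; split; apply: card_imset_le => i j E.
  by apply/eqP; rewrite HF E.
by apply/eqP; rewrite -HF E.
Qed.

(* First return of s into a set T: the least k > 0 with iter k s x in T.
   It is the rotation of the plane tree cut out of a map. *)
Section FirstReturn.
Variables (D : finType) (s : {perm D}) (T : {set D}).

Definition return_time x :=
  (find (fun n => iter n.+1 s x \in T) (iota 0 #|porbit s x|)).+1.
Definition first_return x := iter (return_time x) s x.

Lemma first_return_unique x k1 k2 :
  0 < k1 -> iter k1 s x \in T -> (forall j, 0 < j < k1 -> iter j s x \notin T) ->
  0 < k2 -> iter k2 s x \in T -> (forall j, 0 < j < k2 -> iter j s x \notin T) ->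
  k1 = k2.
Proof.
move=> p1 T1 H1 p2 T2 H2; apply/eqP; rewrite eqn_leq; apply/andP; split.
  by rewrite leqNgt; apply/negP => lt; move: (H1 k2); rewrite p2 lt T2 => /(_ isT).
by rewrite leqNgt; apply/negP => lt; move: (H2 k1); rewrite p1 lt T1 => /(_ isT).
Qed.

(* From a point of T, the orbit returns to T (at the latest after a full turn). *)
Lemma return_timeP x : x \in T ->
  [/\ 0 < return_time x, first_return x \in T
    & forall j, 0 < j < return_time x -> iter j s x \notin T].
Proof.
move=> xT; set N := #|porbit s x|.
have N0 : 0 < N by rewrite lt0n card_porbit_neq0.
have Hhas : has (fun n => iter n.+1 s x \in T) (iota 0 N).
  apply/hasP; exists N.-1; first by rewrite mem_iota add0n prednK // leqnn andbT.
  by rewrite prednK // iter_porbit.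
have lt := Hhas; rewrite has_find size_iota in lt.
split => //.
  by have := nth_find 0 Hhas; rewrite nth_iota // add0n.
move=> j /andP [j0 jk].
have jf : j.-1 < find (fun n => iter n.+1 s x \in T) (iota 0 N).
  by move: jk; rewrite /return_time -/N; case: j j0 => // j' _; rewrite ltnS.
have := before_find 0 jf.
rewrite nth_iota; last by apply: leq_trans lt; apply: ltnW.
by rewrite add0n prednK // => /negbT.
Qed.

Lemma first_return_inj x y :
  x \in T -> y \in T -> first_return x = first_return y -> x = y.
Proof.
move=> xT yT; case: (return_timeP xT) => p1 _ H1; case: (return_timeP yT) => p2 _ H2.
rewrite /first_return.
wlog le : x y xT yT p1 p2 H1 H2 / return_time x <= return_time y.
  move=> W; case: (leqP (return_time x) (return_time y)) => l; first exact: W.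
  by move=> E; symmetry; apply: W => //; apply: ltnW.
set d := return_time y - return_time x => E0.
have E : x = iter d s y.
  by apply: (@iter_perm_inj _ s (return_time x)); rewrite E0 -iterD subnKC.
case: (posnP d) => [Z|P]; first by move: E; rewrite Z.
have : 0 < d < return_time y by rewrite P /d; lia.
by move/H2; rewrite -E xT.
Qed.

End FirstReturn.

Section Reach.
Variables (D : finType) (s a : {perm D}).
Local Notation reach := (connect (mstep s a)).

Lemma reach_s x : reach x (s x).
Proof. by apply: connect1; rewrite /mstep eqxx. Qed.

Lemma reach_a x : reach x (a x).
Proof. by apply: connect1; rewrite /mstep eqxx orbT. Qed.

Lemma reach_iter_s n x : reach x (iter n s x).
Proof. elim: n => [|n IH]; [exact: connect0 | exact: connect_trans IH (reach_s _)]. Qed.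

Lemma reach_iter_a n x : reach x (iter n a x).
Proof. elim: n => [|n IH]; [exact: connect0 | exact: connect_trans IH (reach_a _)]. Qed.

Lemma reach_sV x : reach x ((s^-1)%g x).
Proof. by case: (permV_as_iter s x) => n ->; apply: reach_iter_s. Qed.

Lemma reach_aV x : reach x ((a^-1)%g x).
Proof. by case: (permV_as_iter a x) => n ->; apply: reach_iter_a. Qed.

(* Both steps are invertible by iteration, so reachability is symmetric. *)
Lemma reach_sym x y : reach x y -> reach y x.
Proof.
case/connectP => p; elim: p x => [|z p IH] x /=; first by move=> _ ->.
case/andP => /orP [/eqP E|/eqP E] pz yl; apply: connect_trans (IH _ pz yl) _.
  by rewrite E; rewrite -{2}(permK s x); apply: reach_sV.
by rewrite E; rewrite -{2}(permK a x); apply: reach_aV.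
Qed.

Lemma reach_phi x : reach x (phi s a x).
Proof. by rewrite /phi permM; apply: connect_trans (reach_a x) (reach_sV _). Qed.

End Reach.

Lemma connect_exit (D : finType) (e : rel D) (U : {set D}) u z :
  connect e u z -> u \in U -> z \notin U ->
  exists x y, [/\ x \in U, y \notin U & e x y].
Proof.
case/connectP=> p; elim: p u => [|y p IH] u /=.
  by move=> _ -> ->.
case/andP=> euy py zl uU zU.
case: (boolP (y \in U)) => yU.
  exact: IH py zl yU zU.
by exists u, y.
Qed.

Definition tree_step (D : finType) (sM aM : {perm D}) (T : {set D}) : rel D :=
  fun x y => [&& x \in T, y \in T & (y == aM x) || (y \in porbit sM x)].

(* The darts are paired into edges one at a time, keeping the partial rotation
   system pi = s^-1 o (a on B), where B is the set of darts already paired.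
   Adding an edge that leaves the set U of vertices reached so far merges two
   orbits of pi, so #orbits(pi) + #edges stays equal to #vertices. *)
Section TreeOneFace.
Variables (D : finType) (s a : {perm D}).
Hypothesis Ha : invol_fpf a.
Hypothesis Hc : mconnected s a.
Variable k : nat.
Hypothesis HD : #|D| = 2 * k.
Hypothesis HV : #|porbits s| = k.+1.

Local Notation verts U := [set porbit s u | u in U].

(* The state after pairing j edges: B the darts of these edges, lying in the
   s-closed set U of darts at the j+1 vertices they reach. *)
Definition partial_tree j := exists (pi : {perm D}) (B U : {set D}),
  [/\ #|B| = 2 * j, #|verts U| = j.+1,
      (forall u, u \in U -> s u \in U), U != set0 &
      [/\ (forall x, x \in B -> x \in U), (forall x, x \in B -> a x \in B),
          (forall x, pi x = (s^-1)%g (if x \in B then a x else x))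
        & #|porbits pi| + j = #|porbits s| ] ].

Lemma partial_tree0 : partial_tree 0.
Proof.
have : porbits s != set0 by rewrite -card_gt0 HV.
case/set0Pn=> O /imsetP [u0 _ _].
exists (s^-1)%g, set0, (porbit s u0); split.
- by rewrite cards0.
- have -> : verts (porbit s u0) = [set porbit s u0].
    apply/setP=> O'; rewrite inE; apply/imsetP/eqP.
      by case=> u /porbit_iterP [n ->] ->; rewrite porbit_iter.
    by move=> ->; exists u0 => //; apply: porbit_id.
  by rewrite cards1.
- by move=> u Hu; rewrite porbit_sym porbit_step porbit_sym.
- by apply/set0Pn; exists u0; apply: porbit_id.
split => //; try by move=> x; rewrite inE.
by rewrite addn0 porbitsV.
Qed.

(* While U misses a vertex, by connectivity some edge leaves U. *)
Lemma exit_edge (U : {set D}) j : j < k -> #|verts U| = j.+1 ->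
  (forall u, u \in U -> s u \in U) -> U != set0 ->
  exists2 x, x \in U & a x \notin U.
Proof.
move=> lk HUc HUs /set0Pn [u0 u0U].
have [z zU] : exists z, z \notin U.
  apply/existsP; rewrite -negb_forall; apply/negP => /forallP HT.
  have E : verts U = porbits s.
    by apply/setP => O; apply/imsetP/imsetP => -[u Hu ->]; exists u => //; apply: HT.
  by move: HUc; rewrite E HV => -[] Ek; move: lk; rewrite Ek ltnn.
case: (connect_exit (Hc u0 z) u0U zU) => x [y [xU yU /orP [/eqP Ey|/eqP Ey]]].
  by move: yU; rewrite Ey HUs.
by exists x; rewrite -?Ey.
Qed.

Lemma verts_add (U : {set D}) y : (forall u, u \in U -> s u \in U) ->
  y \notin U -> #|verts (U :|: porbit s y)| = #|verts U|.+1.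
Proof.
move=> HUs yU.
have -> : verts (U :|: porbit s y) = porbit s y |: verts U.
  apply/setP => O; rewrite !inE; apply/imsetP/orP.
    case=> u; rewrite inE => /orP [uU ->|uO ->].
      by right; apply: imset_f.
    by left; apply/eqP/eqP; rewrite eq_porbit_mem.
  case=> [/eqP ->|/imsetP [u uU ->]].
    by exists y => //; rewrite inE porbit_id orbT.
  by exists u => //; rewrite inE uU.
rewrite cardsU1; suff -> : (porbit s y \in verts U) = false by [].
apply/negP => /imsetP [u uU E].
by move: yU; rewrite (porbit_closed HUs uU (_ : y \in porbit s u)) // -E porbit_id.
Qed.

Lemma partial_treeS j : j < k -> partial_tree j -> partial_tree j.+1.
Proof.
move=> lk [pi [B [U [HB HUc HUs HU0 [BU Ba Hpi Hcnt]]]]].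
have [x xU axU] := exit_edge lk HUc HUs HU0.
have xB : x \notin B by apply: contra axU => /Ba /BU.
have axB : a x \notin B by apply: contra axU => /BU.
have [nx ax2] := Ha x.
(* pi never enters U from outside, so x and a x lie in distinct pi-orbits *)
have pi_out y : y \notin U -> pi y \notin U.
  move=> yU; rewrite Hpi (negbTE (contra (@BU y) yU)).
  by apply: contra yU => /HUs; rewrite permKV.
have xO : x \notin porbit pi (a x).
  apply/negP => /porbit_iterP [n En].
  suff : iter n pi (a x) \notin U by rewrite -En xU.
  by elim: n {En} => [//|n IH]; rewrite iterS pi_out.
exists (tperm x (a x) * pi)%g, (x |: (a x |: B)), (U :|: porbit s (a x)); split.
- by rewrite !cardsU1 !inE negb_or xB axB HB mulnS eq_sym nx.
- by rewrite verts_add // HUc.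
- move=> u; rewrite !inE => /orP [/HUs ->//|uO]; apply/orP; right.
  by rewrite porbit_sym porbit_step porbit_sym.
- by apply/set0Pn; exists x; rewrite inE xU.
split.
- move=> w; rewrite !inE => /or3P [/eqP ->|/eqP ->|/BU ->]; rewrite ?xU //.
  by rewrite porbit_id orbT.
- move=> w; rewrite !inE => /or3P [/eqP ->|/eqP ->|wB]; rewrite ?ax2 ?eqxx ?orbT //.
  by rewrite (Ba _ wB) ?orbT.
- move=> w; rewrite permM !inE; case: tpermP => [->|->|wx wax].
  + by rewrite Hpi (negbTE axB) eqxx.
  + by rewrite Hpi (negbTE xB) ax2 eqxx orbT.
  + by rewrite Hpi; move/eqP: wx => /negbTE ->; move/eqP: wax => /negbTE ->.
- have := porbits_mul_tperm pi x (a x).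
  rewrite /= xO /= eq_sym nx => E.
  by rewrite -Hcnt; move: E => /= E; lia.
Qed.

Lemma tree_one_face : nfaces s a = 1.
Proof.
have [pi [B [U [HB _ _ _ [_ _ Hpi Hcnt]]]]] : partial_tree k.
  suff all_j j : j <= k -> partial_tree j by exact: all_j.
  elim: j => [_|j IH lk]; first exact: partial_tree0.
  by apply: partial_treeS => //; apply: IH; apply: ltnW.
have BT : B = setT by apply/eqP; rewrite eqEcard subsetT cardsT HD HB leqnn.
rewrite /nfaces; have -> : phi s a = pi by apply/permP => x; rewrite Hpi BT inE permM.
by apply/eqP; rewrite -(eqn_add2r k) Hcnt HV add1n.
Qed.

End TreeOneFace.

(* The contour permutation a * s of a premap has as many orbits as it has
   faces (it is conjugate to the face permutation by a). *)
Lemma nfaces_contour (D : finType) (s a : {perm D}) :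
  invol_fpf a -> #|porbits (a * s)%g| = nfaces s a.
Proof.
move=> Ha; have aV : (a^-1)%g = a.
  by apply/permP => x; apply: (@perm_inj _ a); rewrite permKV; case: (Ha x).
rewrite /nfaces /phi -porbitsV invMg aV.
apply: (@card_porbits_bij _ _ _ _ a) => [|x]; first by exists a => x; case: (Ha x).
by rewrite !permM.
Qed.

(* The cut relation between a premap M (darts DM) with a set T of darts, a
   premap P (darts DP, the tree) and a premap S (darts DS, M cut open):
   h identifies the darts of P with T, io embeds the darts of M into S and nu
   adds the darts of the hole, one per dart of P. *)
Section CutRelation.
Variables (DM DP DS : finType).
Variables (sM aM : {perm DM}) (T : {set DM}) (sP aP : {perm DP}) (sS aS : {perm DS}).
Variables (h : DP -> DM) (io : DM -> DS) (nu : DP -> DS).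

Record cutrel : Prop := CutRel {
 cr_hinj : injective h;
 cr_T : forall x, x \in T <-> exists i, h i = x;
 cr_ioinj : injective io;
 cr_nuinj : injective nu;
 cr_disj : forall y i, io y != nu i;
 cr_cov : forall z, (exists y, z = io y) \/ (exists i, z = nu i);
 (* P carries the involution of M, and as rotation the first return into T *)
 cr_ha : forall i, h (aP i) = aM (h i);
 cr_first : forall i, exists k, [/\ 0 < k, h (sP i) = iter k sM (h i)
             & forall j, 0 < j < k -> iter j sM (h i) \notin T];
 (* in S each tree edge is doubled: a dart of T is now paired with a hole dart *)
 cr_aS1 : forall y, y \notin T -> aS (io y) = io (aM y);
 cr_aS2 : forall i, aS (io (h i)) = nu (aP i);
 cr_aS3 : forall i, aS (nu i) = io (h (aP i));
 (* around a vertex of S, turning onto a tree dart enters the hole instead *)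
 cr_sS1 : forall y, sM y \notin T -> sS (io y) = io (sM y);
 cr_sS2 : forall y i, sM y = h i -> sS (io y) = nu i;
 cr_sS3 : forall i, sS (nu i) = io (h ((sP^-1)%g i)) }.

Hypothesis R : cutrel.

Lemma h_in_T i : h i \in T.
Proof. by apply/(cr_T R); exists i. Qed.

Lemma T_as_h y : y \in T -> exists i, y = h i.
Proof. by case/(cr_T R) => i <-; exists i. Qed.

Lemma alpha_T y : (aM y \in T) = (y \in T).
Proof.
have sub : aM @: T \subset T.
  apply/subsetP=> z /imsetP [x xT ->]; case: (T_as_h xT) => i ->.
  rewrite -(cr_ha R); exact: h_in_T.
have E : aM @: T = T.
  by apply/eqP; rewrite eqEcard sub (card_imset _ (@perm_inj _ aM)) leqnn.
apply/idP/idP => H.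
  by move: H; rewrite -{1}E => /imsetP [x xT /perm_inj ->].
by rewrite -E; apply: imset_f.
Qed.

Lemma sS_inv_nu i : (sS^-1)%g (nu i) = io ((sM^-1)%g (h i)).
Proof. by apply: (@perm_inj _ sS); rewrite permKV (cr_sS2 R (permKV _ _)). Qed.

Lemma sS_inv_io y : y \notin T -> (sS^-1)%g (io y) = io ((sM^-1)%g y).
Proof. by move=> yT; apply: (@perm_inj _ sS); rewrite permKV cr_sS1 ?permKV. Qed.

Lemma sS_inv_ioh i : (sS^-1)%g (io (h i)) = nu (sP i).
Proof. by apply: (@perm_inj _ sS); rewrite permKV (cr_sS3 R) permK. Qed.

(* Faces of S: the old faces of M are untouched... *)
Lemma phiS_io y : phi sS aS (io y) = io (phi sM aM y).
Proof.
rewrite /phi !permM.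
case: (boolP (y \in T)) => yT.
  by case/T_as_h: yT => i ->; rewrite (cr_aS2 R) sS_inv_nu (cr_ha R).
by rewrite (cr_aS1 R yT) sS_inv_io // alpha_T.
Qed.

(* ...and the hole darts follow the contour of P. *)
Lemma phiS_nu i : phi sS aS (nu i) = nu ((aP * sP)%g i).
Proof. by rewrite /phi !permM (cr_aS3 R) sS_inv_ioh. Qed.

Lemma faces_count : nfaces sS aS = nfaces sM aM + #|porbits (aP * sP)%g|.
Proof.
apply: (card_porbits_union (cr_ioinj R) (cr_nuinj R) (cr_disj R) (cr_cov R)).
  exact: phiS_io.
exact: phiS_nu.
Qed.

Lemma h_iter_sP i n : h (iter n sP i) \in porbit sM (h i).
Proof.
elim: n => [|n IH]; first exact: porbit_id.
case: (cr_first R (iter n sP i)) => k [_ E _].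
rewrite iterS E; move: IH; rewrite -eq_porbit_mem => /eqP <-.
exact: iter_perm_porbit.
Qed.

Lemma h_porbit_sP i j : h j \in porbit sM (h i) -> j \in porbit sP i.
Proof.
case/porbit_iterP => N; elim: N {-2}N (leqnn N) i => [|N IH] N' HN' i.
  by move: HN'; rewrite leqn0 => /eqP -> /= /(cr_hinj R) ->; apply: porbit_id.
move=> E; case: (cr_first R i) => k [k0 Ek Hk].
case: (ltnP N' k) => lNk.
  case: (posnP N') => [N0|N0].
    by move: E; rewrite N0 /= => /(cr_hinj R) ->; apply: porbit_id.
  by move: (Hk N'); rewrite N0 lNk -E h_in_T => /(_ isT).
have E' : h j = iter (N' - k) sM (h (sP i)) by rewrite Ek -iterD subnK.
have : j \in porbit sP (sP i) by apply: (IH (N' - k)) => //; lia.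
by rewrite porbit_step.
Qed.

Lemma porbit_h_equiv i j :
  (porbit sM (h i) == porbit sM (h j)) = (porbit sP i == porbit sP j).
Proof.
rewrite !eq_porbit_mem; apply/idP/idP.
  by rewrite porbit_sym => /h_porbit_sP; rewrite porbit_sym.
by case/porbit_iterP => n ->; apply: h_iter_sP.
Qed.

Lemma tree_vertices : #|porbits sP| = #|[set porbit sM x | x in T]|.
Proof.
have -> : [set porbit sM x | x in T] = [set porbit sM (h i) | i in [set: DP]].
  apply/setP=> O; apply/imsetP/imsetP.
    by case=> x /T_as_h [i ->] ->; exists i.
  by case=> i _ ->; exists (h i) => //; apply: h_in_T.
rewrite porbitsT; symmetry; apply: card_imset_equiv => i j; exact: porbit_h_equiv.
Qed.

(* The sector of S between the tree darts h i and h (sP i): from io (h i),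
   turn through the non-tree darts of M, reach the hole dart nu (sP i), and
   come back to io (h i).  So each tree dart gives its own vertex of S. *)
Section Sector.
Variables (i : DP) (k : nat).
Hypothesis k0 : 0 < k.
Hypothesis Ek : h (sP i) = iter k sM (h i).
Hypothesis Hk : forall j, 0 < j < k -> iter j sM (h i) \notin T.

Lemma sector_lt j : j < k -> iter j sS (io (h i)) = io (iter j sM (h i)).
Proof.
elim: j => [//|j IH] lj; rewrite iterS IH ?(ltnW lj) // (cr_sS1 R) // -iterS.
by apply: Hk; rewrite lj.
Qed.

Lemma sector_k : iter k sS (io (h i)) = nu (sP i).
Proof.
case: k k0 Ek Hk sector_lt => [//|k'] _ Ek' _ Hlt.
rewrite iterS Hlt //; apply: (cr_sS2 R); by rewrite -iterS Ek'.
Qed.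

Lemma sector_cycle : iter k.+1 sS (io (h i)) = io (h i).
Proof. by rewrite iterS sector_k (cr_sS3 R) permK. Qed.

Lemma sector_unique i' : io (h i') \in porbit sS (io (h i)) -> i' = i.
Proof.
case/porbit_iterP => n; rewrite (iter_cycle_mod n sector_cycle).
have : n %% k.+1 <= k by rewrite -ltnS ltn_mod.
rewrite leq_eqVlt => /orP [/eqP ->|lt].
  by rewrite sector_k => /eqP; rewrite (negbTE (cr_disj R _ _)).
rewrite sector_lt // => /(cr_ioinj R) E.
case: (posnP (n %% k.+1)) => [Z|P].
  by move: E; rewrite Z /= => /(cr_hinj R).
have : 0 < n %% k.+1 < k by rewrite P lt.
by move/Hk; rewrite -E h_in_T.
Qed.

End Sector.

Lemma orbit_unique_tree i i' : io (h i') \in porbit sS (io (h i)) -> i' = i.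
Proof.
by case: (cr_first R i) => k [k0 Ek Hk]; apply: (sector_unique k0 Ek Hk).
Qed.

(* A vertex of M is free when no tree dart starts there; it survives in S. *)
Definition free y := [forall x in porbit sM y, x \notin T].
Definition free_verts := [set porbit sM y | y in DM & free y].

Lemma freeP y : reflect (forall x, x \in porbit sM y -> x \notin T) (free y).
Proof. exact: (iffP forall_inP). Qed.

Lemma not_freeP y : ~~ free y -> exists2 x, x \in porbit sM y & x \in T.
Proof.
rewrite /free negb_forall => /existsP [x]; rewrite negb_imply negbK => /andP [].
by exists x.
Qed.

Lemma free_iter y : free y -> forall n, iter n sS (io y) = io (iter n sM y).
Proof.
move=> /freeP Hf; elim=> [//|n IH]; rewrite iterS IH (cr_sS1 R) // -iterS.
by apply: Hf; apply: iter_perm_porbit.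
Qed.

Lemma free_porbit y : free y -> porbit sS (io y) = io @: porbit sM y.
Proof.
move=> Hf; apply/setP=> z; apply/porbit_iterP/imsetP.
  by case=> n ->; rewrite free_iter //; exists (iter n sM y) => //; apply: iter_perm_porbit.
by case=> x /porbit_iterP [n ->] ->; exists n; rewrite free_iter.
Qed.

Lemma card_verts_M :
  #|porbits sM| = #|[set porbit sM x | x in T]| + #|free_verts|.
Proof.
set OT := [set porbit sM x | x in T].
have -> : porbits sM = OT :|: free_verts.
  apply/setP=> O; rewrite inE; apply/imsetP/orP.
    case=> y _ ->; case: (boolP (free y)) => fy.
      by right; apply/imsetP; exists y => //; rewrite inE.
    left; apply/imsetP; case: (not_freeP fy) => x xo xT.
    by exists x => //; apply/eqP; rewrite eq_sym eq_porbit_mem.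
  by case=> /imsetP [x _ ->]; exists x.
rewrite cardsU; suff -> : OT :&: free_verts = set0 by rewrite cards0 subn0.
apply/setP=> O; rewrite !inE; apply/negbTE/negP.
case/andP=> /imsetP [x xT ->] /imsetP [y]; rewrite inE => /freeP fy /eqP.
by rewrite eq_porbit_mem => xy; move: (fy x xy); rewrite xT.
Qed.

Lemma not_free_porbit y : ~~ free y ->
  exists i, porbit sS (io y) = porbit sS (io (h i)).
Proof.
case/not_freeP => x /porbit_iterP [n E] xT.
elim: n y E => [|n IH] y E.
  by rewrite /= in E; subst x; case/T_as_h: xT => i ->; exists i.
case: (boolP (sM y \in T)) => syT.
  case/T_as_h: syT => i Ei; exists ((sP^-1)%g i).
  by rewrite -porbit_step (cr_sS2 R Ei) -porbit_step (cr_sS3 R).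
by rewrite -porbit_step (cr_sS1 R syT); apply: IH; rewrite E iterSr.
Qed.

Lemma card_verts_S : #|porbits sS| = #|DP| + #|free_verts|.
Proof.
set SA := [set porbit sS (io (h i)) | i in DP].
set SB := (fun O : {set DM} => io @: O) @: free_verts.
have HSA : #|SA| = #|DP|.
  rewrite card_in_imset // => i j _ _ E; apply: (@orbit_unique_tree j i).
  by rewrite -E porbit_id.
have HSB : #|SB| = #|free_verts|.
  by rewrite card_imset //; apply: imset_inj; apply: (cr_ioinj R).
have -> : porbits sS = SA :|: SB.
  apply/setP=> O; rewrite inE; apply/imsetP/orP.
    case=> z _ ->; case: (cr_cov R z) => [[y ->]|[i ->]]; last first.
      left; apply/imsetP; exists ((sP^-1)%g i) => //.
      by rewrite -(cr_sS3 R) porbit_step.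
    case: (boolP (free y)) => fy.
      right; apply/imsetP; exists (porbit sM y); first by apply/imsetP; exists y; rewrite ?inE.
      exact: free_porbit.
    by left; case: (not_free_porbit fy) => i ->; apply: imset_f.
  case=> [/imsetP [i _ ->]|/imsetP [O' /imsetP [y yf ->] ->]].
    by exists (io (h i)).
  rewrite inE in yf.
  by exists (io y) => //; rewrite free_porbit.
rewrite cardsU; suff -> : SA :&: SB = set0 by rewrite cards0 subn0 HSA HSB.
apply/setP=> O; rewrite !inE; apply/negbTE/negP.
case/andP=> /imsetP [i _ ->] /imsetP [O' /imsetP [y yf ->]].
rewrite inE in yf; rewrite -free_porbit //.
move/eqP; rewrite eq_porbit_mem => /porbit_iterP [n].
rewrite free_iter // => /(cr_ioinj R) E.
by move/freeP: yf => /(_ (iter n sM y) (iter_perm_porbit _ _ _)); rewrite -E h_in_T.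
Qed.

Lemma vertex_count :
  #|porbits sS| + #|[set porbit sM x | x in T]| = #|DP| + #|porbits sM|.
Proof. by rewrite card_verts_S card_verts_M; lia. Qed.

Local Notation reachS := (connect (mstep sS aS)).
Local Notation reachM := (connect (mstep sM aM)).

(* When P has a single face, the hole is one face of S, hence connected... *)
Lemma reach_hole : #|porbits (aP * sP)%g| = 1 -> forall i j, reachS (nu i) (nu j).
Proof.
move=> H1 i j; case/porbit_iterP: (mem_single_porbit i j H1) => n ->.
elim: n => [|n IH]; first exact: connect0.
apply: connect_trans IH _; rewrite iterS -phiS_nu; exact: reach_phi.
Qed.

(* ...and every tree dart is one edge away from the hole. *)
Lemma reach_tree_hole : #|porbits (aP * sP)%g| = 1 ->
  forall i j, reachS (io (h i)) (nu j).
Proof.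
move=> H1 i j; apply: connect_trans (reach_hole H1 (aP i) j).
rewrite -(cr_aS2 R); exact: reach_a.
Qed.

(* Each step of M can be followed in S, possibly through the hole. *)
Lemma reach_lift_step : #|porbits (aP * sP)%g| = 1 ->
  forall y y', mstep sM aM y y' -> reachS (io y) (io y').
Proof.
move=> H1 y y'; have back i j : reachS (nu j) (io (h i)).
  exact/reach_sym/reach_tree_hole.
case/orP => /eqP ->.
  case: (boolP (sM y \in T)) => syT.
    case: (T_as_h syT) => i Ei; rewrite Ei.
    apply: connect_trans (back i i); rewrite -(cr_sS2 R Ei); exact: reach_s.
  by rewrite -(cr_sS1 R syT); exact: reach_s.
case: (boolP (y \in T)) => yT.
  case: (T_as_h yT) => i ->; rewrite -(cr_ha R).
  exact: connect_trans (reach_tree_hole H1 i i) (back _ _).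
by rewrite -(cr_aS1 R yT); exact: reach_a.
Qed.

Lemma connected_cut : mconnected sM aM -> #|porbits (aP * sP)%g| = 1 ->
  mconnected sS aS.
Proof.
move=> HM H1.
have io_conn y y' : reachS (io y) (io y').
  case/connectP: (HM y y') => p; elim: p y => [|z p IH] y /=.
    by move=> _ ->; exact: connect0.
  by case/andP => st pz yl; apply: connect_trans (reach_lift_step H1 st) (IH _ pz yl).
have [i0 _] : exists i0 : DP, true.
  move/eqP: (H1) => /cards1P [O EO]; have : O \in porbits (aP * sP)%g by rewrite EO set11.
  by case/imsetP=> i _ _; exists i.
have to_hole z : reachS z (nu i0).
  case: (cr_cov R z) => [[y ->]|[i ->]]; last exact: reach_hole.
  exact: connect_trans (io_conn y (h i0)) (reach_tree_hole H1 _ _).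
by move=> z w; apply: connect_trans (to_hole z) (reach_sym (to_hole w)).
Qed.

Definition lies_over z y := (z == io y) || [exists i, (z == nu i) && (y == h i)].

Lemma glue_step z w y : mstep sS aS z w -> lies_over z y ->
  exists2 y', lies_over w y' & reachM y y'.
Proof.
have over_nu i : lies_over (nu i) (h i).
  by rewrite /lies_over; apply/orP; right; apply/existsP; exists i; rewrite !eqxx.
case/orP=> /eqP -> /orP [/eqP ->|/existsP [i /andP [/eqP -> /eqP ->]]].
- case: (boolP (sM y \in T)) => syT.
    case: (T_as_h syT) => i Ei; exists (h i); last by rewrite -Ei; exact: reach_s.
    by rewrite (cr_sS2 R Ei).
  by exists (sM y); [rewrite /lies_over (cr_sS1 R syT) eqxx | exact: reach_s].
- exists (h ((sP^-1)%g i)); first by rewrite /lies_over (cr_sS3 R) eqxx.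
  apply: reach_sym; case: (cr_first R ((sP^-1)%g i)) => k [_ Ek _].
  by rewrite permKV in Ek; rewrite Ek; apply: reach_iter_s.
- case: (boolP (y \in T)) => yT.
    case: (T_as_h yT) => i ->; exists (h (aP i)); first by rewrite (cr_aS2 R).
    by rewrite (cr_ha R); exact: reach_a.
  by exists (aM y); [rewrite /lies_over (cr_aS1 R yT) eqxx | exact: reach_a].
- exists (h (aP i)); first by rewrite /lies_over (cr_aS3 R) eqxx.
  by rewrite (cr_ha R); exact: reach_a.
Qed.

Lemma connected_glue : mconnected sS aS -> mconnected sM aM.
Proof.
move=> HS y y'; case/connectP: (HS (io y) (io y')) => p.
suff gen z y0 : lies_over z y0 -> reachM y y0 -> path (mstep sS aS) z p ->
    io y' = last z p -> reachM y y'.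
  by apply: (gen _ y); [rewrite /lies_over eqxx | exact: connect0].
elim: p z y0 => [|w q IH] z y0 Hr Hc /=.
  move=> _ E; move: Hr; rewrite /lies_over -E => /orP [/eqP /(cr_ioinj R) -> //|].
  by case/existsP=> i /andP [/eqP E' _]; move: (cr_disj R y' i); rewrite E' eqxx.
case/andP=> sw pw yl; case: (glue_step sw Hr) => y1 r1 c1.
exact: (IH w y1 r1 (connect_trans Hc c1) pw yl).
Qed.

Lemma P_connected_of_T :
  (forall x y, x \in T -> y \in T -> connect (tree_step sM aM T) x y) ->
  mconnected sP aP.
Proof.
move=> HT i j.
have : connect (tree_step sM aM T) (h i) (h j) by apply: HT; apply: h_in_T.
case/connectP => p; elim: p i => [|w p IH] i /=.
  by move=> _ /(cr_hinj R) ->; exact: connect0.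
case/andP => /and3P [_ wT /orP [/eqP Ew|wo]] pw yl; case: (T_as_h wT) => i' Ei'; subst w.
  rewrite Ei' in pw yl; apply: (connect_trans _ (IH _ pw yl)); rewrite -(cr_ha R) in Ei'.
  by rewrite -((cr_hinj R) _ _ Ei'); exact: reach_a.
apply: (connect_trans _ (IH _ pw yl)).
by case/porbit_iterP: (h_porbit_sP wo) => n ->; apply: reach_iter_s.
Qed.

Lemma T_connected_of_P : mconnected sP aP ->
  forall x y, x \in T -> y \in T -> connect (tree_step sM aM T) x y.
Proof.
move=> HP x y /T_as_h [i ->] /T_as_h [j ->].
case/connectP: (HP i j) => p; elim: p i => [|w p IH] i /=.
  by move=> _ ->; exact: connect0.
case/andP => st pw yl; apply: (connect_trans _ (IH _ pw yl)).
apply: connect1; rewrite /tree_step !h_in_T /=.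
case/orP: st => /eqP ->; last by rewrite (cr_ha R) eqxx.
by rewrite (h_iter_sP i 1) orbT.
Qed.

Lemma invP_of_M : invol_fpf aM -> invol_fpf aP.
Proof.
move=> HM i; case: (HM (h i)) => nf inv; split.
  by apply: contra nf => /eqP E; rewrite -(cr_ha R) E.
by apply: (cr_hinj R); rewrite !(cr_ha R).
Qed.

Lemma invS_of_M : invol_fpf aM -> invol_fpf aS.
Proof.
move=> HM; have HP := invP_of_M HM.
move=> z; case: (cr_cov R z) => [[y ->]|[i ->]].
  case: (boolP (y \in T)) => yT.
    case: (T_as_h yT) => i ->; rewrite (cr_aS2 R) (cr_aS3 R); case: (HP i) => _ ->.
    by rewrite eq_sym (cr_disj R).
  rewrite (cr_aS1 R yT) (cr_aS1 R); last by rewrite alpha_T.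
  by case: (HM y) => nf ->; split => //; apply: contra nf => /eqP /(cr_ioinj R) ->.
rewrite (cr_aS3 R) (cr_aS2 R); case: (HP i) => _ ->; split => //.
by rewrite (cr_disj R).
Qed.

Lemma invM_of_SP : invol_fpf aS -> invol_fpf aP -> invol_fpf aM.
Proof.
move=> HS HP y; case: (boolP (y \in T)) => yT.
  case: (T_as_h yT) => i ->; rewrite -!(cr_ha R); case: (HP i) => nf inv; split.
    by apply: contra nf => /eqP /(cr_hinj R) ->.
  by rewrite inv.
have ayT : aM y \notin T by rewrite alpha_T.
case: (HS (io y)) => nf inv; rewrite (cr_aS1 R yT) in nf inv.
rewrite (cr_aS1 R ayT) in inv; split.
  by apply: contra nf => /eqP ->.
exact: (cr_ioinj R).
Qed.

Lemma hole_orbit : #|porbits (aP * sP)%g| = 1 ->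
  forall i, porbit (phi sS aS) (nu i) = nu @: setT.
Proof.
move=> H1 i; rewrite -(porbit_equivariant _ (fun x => esym (phiS_nu x))).
suff -> : porbit (aP * sP)%g i = setT by [].
by apply/setP => j; rewrite inE mem_single_porbit.
Qed.

Lemma hole_simple i j : porbit sS (nu i) = porbit sS (nu j) -> i = j.
Proof.
rewrite -porbit_step (cr_sS3 R) -[in RHS]porbit_step (cr_sS3 R) => E.
have : io (h ((sP^-1)%g j)) \in porbit sS (io (h ((sP^-1)%g i))) by rewrite E porbit_id.
by move/orbit_unique_tree => /(congr1 sP); rewrite !permKV => ->.
Qed.

End CutRelation.

Definition iso_perm (D : finType) (s a : {perm D}) (r : D) (s' a' : {perm D}) (r' : D) :=
  exists p : {perm D}, [/\ forall x, p (s x) = s' (p x),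
                          forall x, p (a x) = a' (p x) & p r = r'].

Lemma perm_commV (D : finType) (p s s' : {perm D}) :
  (forall x, p (s x) = s' (p x)) -> forall x, p ((s^-1)%g x) = (s'^-1)%g (p x).
Proof. by move=> H x; apply: (@perm_inj _ s'); rewrite permKV -H permKV. Qed.

Lemma pV_comm (D : finType) (p s s' : {perm D}) :
  (forall x, p (s x) = s' (p x)) -> forall x, (p^-1)%g (s' x) = s ((p^-1)%g x).
Proof. by move=> H x; apply: (@perm_inj _ p); rewrite permKV H permKV. Qed.

Section Transport.
Variables (DM DP DS : finType).
Variables (sM aM : {perm DM}) (T : {set DM}) (sP aP : {perm DP}) (sS aS : {perm DS}).
Variables (h : DP -> DM) (io : DM -> DS) (nu : DP -> DS).
Hypothesis R : cutrel sM aM T sP aP sS aS h io nu.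
Variables (p sM' aM' : {perm DM}) (T' : {set DM}).
Hypothesis ps : forall x, p (sM x) = sM' (p x).
Hypothesis pa : forall x, p (aM x) = aM' (p x).
Hypothesis pT : forall x, (p x \in T') = (x \in T).

Lemma pVT x : ((p^-1)%g x \in T) = (x \in T').
Proof. by rewrite -pT permKV. Qed.

Lemma transport :
  cutrel sM' aM' T' sP aP sS aS (fun i => p (h i)) (fun y => io ((p^-1)%g y)) nu.
Proof.
case: R => hinj HT ioinj nuinj disj cov ha first aS1 aS2 aS3 sS1 sS2 sS3.
split.
- by move=> i j /perm_inj /hinj.
- move=> x; rewrite -pVT HT; split => [[i Ei]|[i <-]]; last by exists i; rewrite permK.
  by exists i; rewrite Ei permKV.
- by move=> y y' /ioinj /perm_inj.
- exact: nuinj.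
- by move=> y i; apply: disj.
- move=> z; case: (cov z) => [[y ->]|[i ->]]; last by right; exists i.
  by left; exists (p y); rewrite permK.
- by move=> i; rewrite ha pa.
- move=> i; case: (first i) => k [k0 Ek Hk]; exists k; split => //.
    by rewrite Ek (iter_equivariant ps).
  by move=> j /Hk; rewrite -(iter_equivariant ps) pT.
- by move=> y yT; rewrite aS1 ?pVT // (pV_comm pa).
- by move=> i; rewrite permK aS2.
- by move=> i; rewrite aS3 permK.
- move=> y yT; rewrite sS1; first by congr io; rewrite -(pV_comm ps).
  by rewrite -(pV_comm ps) pVT.
- move=> y i E; apply: sS2; by rewrite -(pV_comm ps) E permK.
- by move=> i; rewrite sS3 permK.
Qed.

End Transport.

(* Two cut relations for the same (M,T) have isomorphic P's and S's: the
   isomorphisms are read off from the dart embeddings. *)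
Section Functional.
Variables (DM DP DS : finType).
Variables (sM aM : {perm DM}) (T : {set DM}).
Variables (sP aP sP' aP' : {perm DP}) (sS aS sS' aS' : {perm DS}).
Variables (h h' : DP -> DM) (io io' : DM -> DS) (nu nu' : DP -> DS).
Hypothesis R : cutrel sM aM T sP aP sS aS h io nu.
Hypothesis R' : cutrel sM aM T sP' aP' sS' aS' h' io' nu'.

Definition tree_match i := odflt i [pick j | h' j == h i].

Lemma tree_matchE i : h' (tree_match i) = h i.
Proof.
rewrite /tree_match; case: pickP => [j /eqP //|H].
case: (T_as_h R' (h_in_T R i)) => j Ej; by move: (H j); rewrite Ej eqxx.
Qed.

Lemma tree_match_inj : injective tree_match.
Proof. by move=> i j E; apply: (cr_hinj R); rewrite -!tree_matchE E. Qed.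

Definition tree_perm := perm tree_match_inj.

(* Rotations agree since both are the first return of sM into T. *)
Lemma tree_perm_s i : tree_perm (sP i) = sP' (tree_perm i).
Proof.
rewrite !permE; apply: (cr_hinj R'); rewrite tree_matchE.
case: (cr_first R i) => k1 [p1 E1 H1].
case: (cr_first R' (tree_match i)) => k2 [p2 E2 H2].
rewrite tree_matchE in E2 H2; rewrite E1 E2; congr iter.
apply: (first_return_unique p1 _ H1 p2 _ H2).
  by rewrite -E1; exact: (h_in_T R).
by rewrite -E2; exact: (h_in_T R').
Qed.

Lemma tree_perm_a i : tree_perm (aP i) = aP' (tree_perm i).
Proof.
by rewrite !permE; apply: (cr_hinj R'); rewrite tree_matchE (cr_ha R) (cr_ha R') tree_matchE.
Qed.

Definition cut_match z :=
  if [pick y | io y == z] is Some y then io' y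
  else odflt z (omap (fun i => nu' (tree_perm i)) [pick i | nu i == z]).

Lemma cut_match_io y : cut_match (io y) = io' y.
Proof.
rewrite /cut_match; case: pickP => [y' /eqP /(cr_ioinj R) -> //|H].
by move: (H y); rewrite eqxx.
Qed.

Lemma cut_match_nu i : cut_match (nu i) = nu' (tree_perm i).
Proof.
rewrite /cut_match; case: pickP => [y' /eqP E|_].
  by move: (cr_disj R y' i); rewrite E eqxx.
case: pickP => [j /eqP /(cr_nuinj R) -> //|H].
by move: (H i); rewrite eqxx.
Qed.

Lemma cut_match_inj : injective cut_match.
Proof.
move=> z w; case: (cr_cov R z) => [[y ->]|[i ->]]; case: (cr_cov R w) => [[y' ->]|[i' ->]];
  rewrite ?cut_match_io ?cut_match_nu.
- by move/(cr_ioinj R') ->.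
- by move=> E; move: (cr_disj R' y (tree_perm i')); rewrite E eqxx.
- by move=> E; move: (cr_disj R' y' (tree_perm i)); rewrite E eqxx.
- by move/(cr_nuinj R')/perm_inj ->.
Qed.

Definition cut_perm := perm cut_match_inj.

Lemma cut_perm_s z : cut_perm (sS z) = sS' (cut_perm z).
Proof.
rewrite !permE; case: (cr_cov R z) => [[y ->]|[i ->]]; last first.
  rewrite (cr_sS3 R) cut_match_nu cut_match_io (cr_sS3 R'); congr io'.
  by rewrite -(perm_commV tree_perm_s) /tree_perm permE tree_matchE.
rewrite cut_match_io; case: (boolP (sM y \in T)) => syT.
  case: (T_as_h R syT) => i Ei.
  rewrite (cr_sS2 R Ei) cut_match_nu (cr_sS2 R' (i:=tree_perm i)) //.
  by rewrite /tree_perm permE tree_matchE.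
by rewrite (cr_sS1 R syT) (cr_sS1 R' syT) cut_match_io.
Qed.

Lemma cut_perm_a z : cut_perm (aS z) = aS' (cut_perm z).
Proof.
rewrite !permE; case: (cr_cov R z) => [[y ->]|[i ->]]; last first.
  by rewrite (cr_aS3 R) cut_match_nu cut_match_io (cr_aS3 R') -tree_perm_a permE tree_matchE.
rewrite cut_match_io; case: (boolP (y \in T)) => yT.
  case: (T_as_h R yT) => i ->.
  rewrite (cr_aS2 R) cut_match_nu -[h i]tree_matchE (cr_aS2 R').
  by rewrite tree_perm_a permE.
by rewrite (cr_aS1 R yT) (cr_aS1 R' yT) cut_match_io.
Qed.

Lemma functional rM rP rP' rS rS' :
  h rP = rM -> h' rP' = rM -> nu rP = rS -> nu' rP' = rS' ->
  iso_perm sP aP rP sP' aP' rP' /\ iso_perm sS aS rS sS' aS' rS'.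
Proof.
move=> hr hr' nr nr'.
have qr : tree_perm rP = rP'.
  by rewrite permE; apply: (cr_hinj R'); rewrite tree_matchE hr hr'.
split; first by exists tree_perm; split => //; [exact: tree_perm_s | exact: tree_perm_a].
exists cut_perm; split; [exact: cut_perm_s | exact: cut_perm_a |].
by rewrite permE -nr cut_match_nu qr nr'.
Qed.

End Functional.

(* The
   hole isomorphism is forced by the tree isomorphism (the hole is one face),
   hence the isomorphism of S restricts to an isomorphism of M preserving T. *)
Section Lift.
Variables (DM DP DS : finType).
Variables (sM aM sM' aM' : {perm DM}) (T T' : {set DM}).
Variables (sP aP sP' aP' : {perm DP}) (sS aS sS' aS' : {perm DS}).
Variables (h h' : DP -> DM) (io io' : DM -> DS) (nu nu' : DP -> DS).
Hypothesis R : cutrel sM aM T sP aP sS aS h io nu.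
Hypothesis R' : cutrel sM' aM' T' sP' aP' sS' aS' h' io' nu'.
Hypothesis H1 : #|porbits (aP * sP)%g| = 1.
Variables (rP rP' : DP) (q : {perm DP}) (r : {perm DS}).
Hypothesis qs : forall x, q (sP x) = sP' (q x).
Hypothesis qa : forall x, q (aP x) = aP' (q x).
Hypothesis qr : q rP = rP'.
Hypothesis rs : forall x, r (sS x) = sS' (r x).
Hypothesis ra : forall x, r (aS x) = aS' (r x).
Hypothesis rr : r (nu rP) = nu' rP'.

(* Both sides are equivariant along the contour and agree at the root. *)
Lemma hole_compat i : r (nu i) = nu' (q i).
Proof.
have rphi z : r (phi sS aS z) = phi sS' aS' (r z).
  by rewrite /phi !permM (perm_commV rs) ra.
apply: (@equivariant_agree _ _ (aP * sP)%g (phi sS' aS')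
          (fun i => r (nu i)) (fun i => nu' (q i)) rP).
- by move=> x; rewrite -(phiS_nu R) rphi.
- by move=> x; rewrite (phiS_nu R') permM qs qa permM.
- by rewrite rr qr.
- exact: mem_single_porbit.
Qed.

Lemma r_io y : exists y', r (io y) = io' y'.
Proof.
case: (cr_cov R' (r (io y))) => [[y' E]|[j E]]; first by exists y'.
have : r (io y) = r (nu ((q^-1)%g j)) by rewrite hole_compat permKV.
by move/perm_inj => E'; move: (cr_disj R y ((q^-1)%g j)); rewrite E' eqxx.
Qed.

Definition lift_match y := odflt y [pick y' | io' y' == r (io y)].

Lemma lift_matchE y : io' (lift_match y) = r (io y).
Proof.
rewrite /lift_match; case: pickP => [y' /eqP //|H].
by case: (r_io y) => y' E; move: (H y'); rewrite E eqxx.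
Qed.

Lemma lift_match_inj : injective lift_match.
Proof.
by move=> y z E; apply: (cr_ioinj R); apply: (@perm_inj _ r); rewrite -!lift_matchE E.
Qed.

Definition lift_perm := perm lift_match_inj.

Lemma lift_h i : lift_perm (h i) = h' (q i).
Proof.
rewrite /lift_perm permE; apply: (cr_ioinj R'); apply: (@perm_inj _ aS').
by rewrite lift_matchE -ra (cr_aS2 R) (cr_aS2 R') hole_compat qa.
Qed.

Lemma lift_T y : (lift_perm y \in T') = (y \in T).
Proof.
case: (boolP (y \in T)) => yT.
  by case: (T_as_h R yT) => i ->; rewrite lift_h (h_in_T R').
apply/negP => /(T_as_h R') [j Ej].
have : io' (lift_perm y) = io' (lift_perm (h ((q^-1)%g j))) by rewrite lift_h permKV Ej.
rewrite /lift_perm !permE !lift_matchE => /perm_inj /(cr_ioinj R) E.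
by move: yT; rewrite E (h_in_T R).
Qed.

Lemma lift_a y : lift_perm (aM y) = aM' (lift_perm y).
Proof.
case: (boolP (y \in T)) => yT.
  by case: (T_as_h R yT) => i ->; rewrite -(cr_ha R) !lift_h qa (cr_ha R').
have pyT : lift_perm y \notin T' by rewrite lift_T.
apply: (cr_ioinj R'); rewrite -(cr_aS1 R' pyT) /lift_perm !permE !lift_matchE -ra.
by rewrite (cr_aS1 R yT).
Qed.

Lemma lift_s y : lift_perm (sM y) = sM' (lift_perm y).
Proof.
case: (boolP (sM y \in T)) => syT.
  case: (T_as_h R syT) => i Ei; rewrite Ei lift_h.
  have E1 : sS' (io' (lift_perm y)) = nu' (q i).
    by rewrite /lift_perm permE lift_matchE -rs (cr_sS2 R Ei) hole_compat.
  case: (boolP (sM' (lift_perm y) \in T')) => sT.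
    case: (T_as_h R' sT) => j Ej; rewrite Ej; rewrite (cr_sS2 R' Ej) in E1.
    by rewrite ((cr_nuinj R') _ _ E1).
  by rewrite (cr_sS1 R' sT) in E1; move: (cr_disj R' (sM' (lift_perm y)) (q i)); rewrite E1 eqxx.
have E1 : sS' (io' (lift_perm y)) = io' (lift_perm (sM y)).
  by rewrite /lift_perm !permE !lift_matchE -rs (cr_sS1 R syT).
case: (boolP (sM' (lift_perm y) \in T')) => sT.
  case: (T_as_h R' sT) => j Ej; rewrite (cr_sS2 R' Ej) in E1.
  by move: (cr_disj R' (lift_perm (sM y)) j); rewrite E1 eqxx.
by rewrite (cr_sS1 R' sT) in E1; rewrite ((cr_ioinj R') _ _ E1).
Qed.

End Lift.

(* A permutation from a function that is injective (the identity otherwise). *)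
Definition mkperm (D : finType) (f : D -> D) : {perm D} :=
  if injectiveP f is ReflectT H then perm H else 1%g.

Lemma mkpermE (D : finType) (f : D -> D) : injective f -> mkperm f =1 f.
Proof. by rewrite /mkperm; case: injectiveP => // H _ x; rewrite permE. Qed.

Section Enum.
Variables (D : finType) (n : nat) (T : {set D}) (x0 : D) (i0 : 'I_n).
Hypothesis HT : #|T| = n.

Definition enum_at (i : 'I_n) : D := nth x0 (enum T) i.
Definition enum_index (x : D) : 'I_n := insubd i0 (index x (enum T)).

Lemma size_enumT : size (enum T) = n.
Proof. by rewrite -cardE HT. Qed.

Lemma enum_at_mem i : enum_at i \in T.
Proof. by rewrite -mem_enum mem_nth // size_enumT. Qed.

Lemma enum_at_inj : injective enum_at.
Proof.
move=> i j E; apply: val_inj; apply/eqP.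
rewrite -(@nth_uniq _ x0 (enum T)) ?size_enumT ?enum_uniq ?ltn_ord //; by apply/eqP.
Qed.

Lemma enum_atK i : enum_index (enum_at i) = i.
Proof.
apply: val_inj; rewrite /enum_index val_insubd index_uniq ?size_enumT ?enum_uniq //.
by rewrite ltn_ord.
Qed.

Lemma enum_indexK x : x \in T -> enum_at (enum_index x) = x.
Proof.
move=> xT; rewrite /enum_at /enum_index val_insubd.
have -> : index x (enum T) < n by rewrite -size_enumT index_mem mem_enum.
by rewrite nth_index // mem_enum.
Qed.

End Enum.

(* The cut construction: from M with e + m edges and a set T of 2m darts,
   build the plane tree cutP on 'I_(2m) and the map cutS on 'I_(2(e + 2m)),
   whose darts are the old darts of M followed by the hole darts. *)
Section Cut.
Variables (e m : nat) (i0 : 'I_(2 * m)).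
Variables (M : premap (e + m)) (T : {set 'I_(2 * (e + m))}).
Local Notation sM := (sigma M).
Local Notation aM := (alpha M).
Local Notation DM := 'I_(2 * (e + m)).
Local Notation DP := 'I_(2 * m).
Local Notation DS := 'I_(2 * (e + 2 * m)).

Lemma cut_dim : 2 * (e + m) + 2 * m = 2 * (e + 2 * m).
Proof. lia. Qed.

Definition old_dart (y : DM) : DS := cast_ord cut_dim (unsplit (inl y)).
Definition hole_dart (i : DP) : DS := cast_ord cut_dim (unsplit (inr i)).
Definition dart_kind (z : DS) := split (cast_ord (esym cut_dim) z).

Lemma dart_kind_old y : dart_kind (old_dart y) = inl y.
Proof. by rewrite /dart_kind /old_dart cast_ordK unsplitK. Qed.
Lemma dart_kind_hole i : dart_kind (hole_dart i) = inr i.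
Proof. by rewrite /dart_kind /hole_dart cast_ordK unsplitK. Qed.

Lemma old_dart_inj : injective old_dart.
Proof. by move=> y y' E; move: (dart_kind_old y); rewrite E dart_kind_old => -[]. Qed.
Lemma hole_dart_inj : injective hole_dart.
Proof. by move=> y y' E; move: (dart_kind_hole y); rewrite E dart_kind_hole => -[]. Qed.
Lemma old_hole_disj y i : old_dart y != hole_dart i.
Proof. by apply/eqP => E; move: (dart_kind_old y); rewrite E dart_kind_hole. Qed.
Lemma old_hole_cover z : (exists y, z = old_dart y) \/ (exists i, z = hole_dart i).
Proof.
have E : z = cast_ord cut_dim (unsplit (dart_kind z)) by rewrite /dart_kind splitK cast_ordKV.
by case: (dart_kind z) E => [y|i] ->; [left; exists y | right; exists i].
Qed.

Definition tree_dart := @enum_at _ (2 * m) T (Defs.root M).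
Definition tree_index := enum_index T i0.

Definition cP_a := mkperm (fun i => tree_index (aM (tree_dart i))).
Definition cP_s := mkperm (fun i => tree_index (first_return sM T (tree_dart i))).

(* S: the rotation enters the hole where it would meet a tree dart, and the
   involution pairs each tree dart with a hole dart. *)
Definition cS_sf (z : DS) : DS :=
  match dart_kind z with
  | inl y => if sM y \in T then hole_dart (tree_index (sM y)) else old_dart (sM y)
  | inr i => old_dart (tree_dart ((cP_s^-1)%g i)) end.
Definition cS_af (z : DS) : DS :=
  match dart_kind z with
  | inl y => if y \in T then hole_dart (cP_a (tree_index y)) else old_dart (aM y)
  | inr i => old_dart (tree_dart (cP_a i)) end.

Definition cS_s := mkperm cS_sf.
Definition cS_a := mkperm cS_af.

Definition cutP : premap m := Premap cP_s cP_a (tree_index (Defs.root M)).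
Definition cutS : premap (e + 2 * m) :=
  Premap cS_s cS_a (hole_dart (tree_index (Defs.root M))).

Hypothesis HT : #|T| = 2 * m.
Hypothesis Ta : forall x, x \in T -> aM x \in T.
Hypothesis Ha : invol_fpf aM.

Lemma tree_dart_mem i : tree_dart i \in T. Proof. exact: enum_at_mem. Qed.
Lemma tree_dart_inj : injective tree_dart. Proof. exact: enum_at_inj. Qed.
Lemma tree_dartK i : tree_index (tree_dart i) = i. Proof. exact: enum_atK. Qed.
Lemma tree_indexK x : x \in T -> tree_dart (tree_index x) = x. Proof. exact: enum_indexK. Qed.

Lemma cP_aE i : cP_a i = tree_index (aM (tree_dart i)).
Proof.
apply: mkpermE => i1 j E; apply: tree_dart_inj; apply: (@perm_inj _ aM).
by rewrite -(tree_indexK (Ta (tree_dart_mem i1))) -(tree_indexK (Ta (tree_dart_mem j))) E.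
Qed.

Lemma cP_sE i : cP_s i = tree_index (first_return sM T (tree_dart i)).
Proof.
apply: mkpermE => i1 j E; apply: tree_dart_inj.
apply: (@first_return_inj _ sM T _ _ (tree_dart_mem i1) (tree_dart_mem j)).
have := return_timeP sM (tree_dart_mem i1); case=> _ Ti _.
have := return_timeP sM (tree_dart_mem j); case=> _ Tj _.
by rewrite -(tree_indexK Ti) -(tree_indexK Tj) E.
Qed.

Lemma tree_dart_a i : tree_dart (cP_a i) = aM (tree_dart i).
Proof. by rewrite cP_aE tree_indexK // Ta // tree_dart_mem. Qed.

Lemma aM_T' y : (aM y \in T) = (y \in T).
Proof.
apply/idP/idP => [H|]; last exact: Ta.
by case: (Ha y) => _ <-; apply: Ta.
Qed.

Lemma cS_afE1 y : cS_af (old_dart y) =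
  if y \in T then hole_dart (cP_a (tree_index y)) else old_dart (aM y).
Proof. by rewrite /cS_af dart_kind_old. Qed.
Lemma cS_afE2 i : cS_af (hole_dart i) = old_dart (tree_dart (cP_a i)).
Proof. by rewrite /cS_af dart_kind_hole. Qed.
Lemma cS_sfE1 y : cS_sf (old_dart y) =
  if sM y \in T then hole_dart (tree_index (sM y)) else old_dart (sM y).
Proof. by rewrite /cS_sf dart_kind_old. Qed.
Lemma cS_sfE2 i : cS_sf (hole_dart i) = old_dart (tree_dart ((cP_s^-1)%g i)).
Proof. by rewrite /cS_sf dart_kind_hole. Qed.

(* The involutions of P and S square to the identity, so they are permutations... *)
Lemma cP_a_invol : involutive cP_a.
Proof.
move=> i; apply: tree_dart_inj; rewrite !tree_dart_a.
by case: (Ha (tree_dart i)) => _ ->.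
Qed.

Lemma cS_af_invol : involutive cS_af.
Proof.
move=> z; case: (old_hole_cover z) => [[y ->]|[i ->]]; last first.
  by rewrite cS_afE2 cS_afE1 tree_dart_mem tree_dartK cP_a_invol.
rewrite cS_afE1; case: ifP => yT.
  rewrite cS_afE2 cP_a_invol tree_indexK //.
by rewrite cS_afE1 aM_T' yT; case: (Ha y) => _ ->.
Qed.

Definition cS_sf_inv (z : DS) : DS :=
  match dart_kind z with
  | inl x => if x \in T then hole_dart (cP_s (tree_index x)) else old_dart ((sM^-1)%g x)
  | inr i => old_dart ((sM^-1)%g (tree_dart i)) end.

Lemma cS_sfK : cancel cS_sf cS_sf_inv.
Proof.
move=> z; case: (old_hole_cover z) => [[y ->]|[i ->]]; last first.
  by rewrite cS_sfE2 /cS_sf_inv dart_kind_old tree_dart_mem tree_dartK permKV.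
rewrite cS_sfE1 /cS_sf_inv; case: ifP => syT.
  by rewrite dart_kind_hole tree_indexK // permK.
by rewrite dart_kind_old syT permK.
Qed.

Lemma cS_aE z : cS_a z = cS_af z. Proof. exact: mkpermE (can_inj cS_af_invol) z. Qed.
Lemma cS_sE z : cS_s z = cS_sf z. Proof. exact: mkpermE (can_inj cS_sfK) z. Qed.

Lemma cut_rel : cutrel sM aM T cP_s cP_a cS_s cS_a tree_dart old_dart hole_dart.
Proof.
split.
- exact: tree_dart_inj.
- move=> x; split; last by case=> i <-; apply: tree_dart_mem.
  by move=> xT; exists (tree_index x); apply: tree_indexK.
- exact: old_dart_inj.
- exact: hole_dart_inj.
- exact: old_hole_disj.
- exact: old_hole_cover.
- exact: tree_dart_a.
- move=> i; case: (return_timeP sM (tree_dart_mem i)) => k0 Tf Hk.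
  exists (return_time sM T (tree_dart i)); split => //.
  by rewrite cP_sE tree_indexK.
- by move=> y yT; rewrite cS_aE cS_afE1 (negbTE yT).
- by move=> i; rewrite cS_aE cS_afE1 tree_dart_mem tree_dartK.
- by move=> i; rewrite cS_aE cS_afE2.
- by move=> y yT; rewrite cS_sE cS_sfE1 (negbTE yT).
- by move=> y i E; rewrite cS_sE cS_sfE1 E tree_dart_mem tree_dartK.
- by move=> i; rewrite cS_sE cS_sfE2.
Qed.

End Cut.
(* Matching two orbits of the same length: iterates of c from a are sent to
   the same iterates of p from b.  Used to identify the contour of P with the
   root face of S. *)
Section OrbitMatch.
Variables (A B : finType) (c : {perm A}) (p : {perm B}) (a : A) (b : B).
Hypothesis Hlen : #|porbit c a| = #|porbit p b|.
Local Notation N := #|porbit c a|.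

Definition orbit_match x := iter (index x (traject c a N)) p b.

Lemma orbit_match_iter n : orbit_match (iter n c a) = iter n p b.
Proof.
have N0 : 0 < N by rewrite lt0n card_porbit_neq0.
have lt : n %% N < N by rewrite ltn_mod.
rewrite /orbit_match (iter_mod c a n) -(nth_traject _ lt).
rewrite index_uniq ?size_traject ?uniq_traject_porbit //.
by rewrite [in RHS](iter_mod p b n) Hlen.
Qed.

Lemma orbit_match_comm x : x \in porbit c a -> orbit_match (c x) = p (orbit_match x).
Proof. by case/porbit_iterP => n ->; rewrite -iterS !orbit_match_iter. Qed.

Lemma orbit_match_mem x : orbit_match x \in porbit p b.
Proof. exact: iter_perm_porbit. Qed.

Lemma orbit_match_inj x y : x \in porbit c a -> y \in porbit c a ->
  orbit_match x = orbit_match y -> x = y.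
Proof.
case/porbit_iter_ltP => n ln ->; case/porbit_iter_ltP => n' ln' ->.
rewrite !orbit_match_iter => E; congr iter; apply: (iter_inj_lt _ _ E); by rewrite -Hlen.
Qed.

Lemma orbit_match_onto z : z \in porbit p b ->
  exists2 x, x \in porbit c a & orbit_match x = z.
Proof.
case/porbit_iterP => n ->; exists (iter n c a).
  exact: iter_perm_porbit.
exact: orbit_match_iter.
Qed.

End OrbitMatch.

(* The contour of P is matched
   with H (hole_of); the darts of M are the darts of S outside H (old_of);
   the tree dart i is the dart of S facing the hole dart of aP i. *)
Section Glue.
Variables (e m : nat) (y0 : 'I_(2 * (e + m))).
Variables (P : premap m) (S : premap (e + 2 * m)).
Hypothesis HP : is_plane_tree P.
Hypothesis HS : is_simple_boundary_map m S.
Local Notation sP := (sigma P).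
Local Notation aP := (alpha P).
Local Notation rP := (Defs.root P).
Local Notation sS := (sigma S).
Local Notation aS := (alpha S).
Local Notation rS := (Defs.root S).
Local Notation DM := 'I_(2 * (e + m)).
Local Notation DP := 'I_(2 * m).
Local Notation DS := 'I_(2 * (e + 2 * m)).
Local Notation H := (root_face S).
Local Notation contour := (aP * sP)%g.
Local Notation ph := (phi sS aS).

Lemma aP_inv : invol_fpf aP. Proof. by case: HP => -[]. Qed.
Lemma aS_inv : invol_fpf aS. Proof. by case: HS => -[]. Qed.

(* P has one face, so its contour is a single cycle of length 2m, like H. *)
Lemma contour_one : #|porbits contour| = 1.
Proof. by rewrite nfaces_contour; [case: HP | exact: aP_inv]. Qed.

Lemma contour_all (i : DP) : porbit contour i = setT.
Proof. by apply/setP => j; rewrite inE mem_single_porbit // contour_one. Qed.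

Lemma contour_len : #|porbit contour rP| = #|porbit ph rS|.
Proof.
rewrite contour_all cardsT card_ord.
by case: HS => _ HH _ _; exact: (esym HH).
Qed.

Definition hole_of := orbit_match contour ph rP rS.

Lemma hole_of_comm x : hole_of (contour x) = ph (hole_of x).
Proof. by apply: orbit_match_comm; [exact: contour_len | rewrite (contour_all rP) inE]. Qed.

Lemma hole_of_inj : injective hole_of.
Proof.
move=> x y; apply: orbit_match_inj; first exact: contour_len.
  by rewrite (contour_all rP) inE.
by rewrite (contour_all rP) inE.
Qed.

Lemma hole_of_mem x : hole_of x \in H.
Proof. exact: orbit_match_mem. Qed.

Definition hole_index z := odflt rP [pick i | hole_of i == z].

Lemma hole_indexK z : z \in H -> hole_of (hole_index z) = z.
Proof.
move=> zH; rewrite /hole_index; case: pickP => [i /eqP //|Hn].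
case: (orbit_match_onto contour_len zH) => x _ Ex; by move: (Hn x); rewrite /hole_of Ex eqxx.
Qed.

Lemma hole_ofK i : hole_index (hole_of i) = i.
Proof. by apply: hole_of_inj; rewrite hole_indexK // hole_of_mem. Qed.

Lemma card_outside : #|~: H| = 2 * (e + m).
Proof.
have := cardsC H; rewrite cardT size_enum_ord.
by case: HS => _ HH _ _; rewrite HH; lia.
Qed.

Definition old_of := @enum_at _ (2 * (e + m)) (~: H) rS.
Definition old_index := enum_index (~: H) y0.

Lemma old_of_out y : old_of y \notin H.
Proof. by have := enum_at_mem rS card_outside y; rewrite inE. Qed.
Lemma old_of_inj : injective old_of. Proof. exact: enum_at_inj card_outside. Qed.
Lemma old_indexK z : z \notin H -> old_of (old_index z) = z.
Proof. by move=> zH; apply: (enum_indexK rS y0 card_outside); rewrite inE. Qed.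

Lemma aS_out z : z \in H -> aS z \notin H.
Proof. by case: HS => _ _ _; apply. Qed.

Definition glue_tree i := old_index (aS (hole_of (aP i))).

Lemma old_of_tree i : old_of (glue_tree i) = aS (hole_of (aP i)).
Proof. by rewrite old_indexK // aS_out // hole_of_mem. Qed.

Lemma aS_hole x : aS (hole_of x) = sS (hole_of (sP (aP x))).
Proof.
have := hole_of_comm x; rewrite permM /phi permM => ->.
by rewrite permKV.
Qed.

Lemma aP2 i : aP (aP i) = i. Proof. by case: (aP_inv i). Qed.
Lemma aS2 z : aS (aS z) = z. Proof. by case: (aS_inv z). Qed.

Lemma old_of_tree_s j : old_of (glue_tree j) = sS (hole_of (sP j)).
Proof. by rewrite old_of_tree aS_hole aP2. Qed.

Lemma glue_tree_inj : injective glue_tree.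
Proof.
move=> i j E; have : old_of (glue_tree i) = old_of (glue_tree j) by rewrite E.
by rewrite !old_of_tree => /perm_inj /hole_of_inj /perm_inj.
Qed.

Definition glueT := [set glue_tree i | i in [set: DP]].

Lemma glue_tree_T i : glue_tree i \in glueT. Proof. exact: imset_f. Qed.

(* The dart of M lying under a dart of S (glue_tree for the hole darts); the
   rotation and involution of M are those of S read through [lower]. *)
Definition lower (w : DS) : DM :=
  if w \in H then glue_tree (hole_index w) else old_index w.
Definition gMa_f y := lower (aS (old_of y)).
Definition gMs_f y := lower (sS (old_of y)).

Lemma lower_hole w : w \in H -> lower w = glue_tree (hole_index w).
Proof. by rewrite /lower => ->. Qed.
Lemma lower_old w : w \notin H -> lower w = old_index w.
Proof. by rewrite /lower => /negbTE ->. Qed.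

Lemma lower_perm_inj (p : {perm DS}) :
  (forall j, exists j', old_of (glue_tree j) = p (hole_of j')) ->
  injective (fun y => lower (p (old_of y))).
Proof.
move=> Hp y y'.
have mixed y1 y2 : p (old_of y1) \in H -> p (old_of y2) \notin H ->
    lower (p (old_of y1)) != lower (p (old_of y2)).
  move=> H1 H2; rewrite lower_hole // lower_old //; apply/eqP => E.
  case: (Hp (hole_index (p (old_of y1)))) => j' E'.
  have : p (hole_of j') = p (old_of y2) by rewrite -E' E old_indexK.
  by move/perm_inj => E2; move: (old_of_out y2); rewrite -E2 hole_of_mem.
case: (boolP (p (old_of y) \in H)) => Hy; case: (boolP (p (old_of y') \in H)) => Hy'.
- rewrite !lower_hole // => /glue_tree_inj E; apply: old_of_inj; apply: (@perm_inj _ p).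
  by rewrite -(hole_indexK Hy) -(hole_indexK Hy') E.
- by move=> E; move: (mixed _ _ Hy Hy'); rewrite E eqxx.
- by move=> E; move: (mixed _ _ Hy' Hy); rewrite E eqxx.
- rewrite !lower_old // => E; apply: old_of_inj; apply: (@perm_inj _ p).
  by rewrite -(old_indexK Hy) -(old_indexK Hy') E.
Qed.

Lemma gMa_f_inj : injective gMa_f.
Proof. by apply: lower_perm_inj => j; exists (aP j); exact: old_of_tree. Qed.

Lemma gMs_f_inj : injective gMs_f.
Proof. by apply: lower_perm_inj => j; exists (sP j); exact: old_of_tree_s. Qed.

Definition gMa := mkperm gMa_f.
Definition gMs := mkperm gMs_f.
Lemma gMaE y : gMa y = gMa_f y. Proof. exact: mkpermE gMa_f_inj y. Qed.
Lemma gMsE y : gMs y = gMs_f y. Proof. exact: mkpermE gMs_f_inj y. Qed.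

Definition glueM : premap (e + m) := Premap gMs gMa (glue_tree rP).
Definition glueX : tdmap (e + m) := TDMap glueM glueT.

Lemma glueT_as_tree y : y \in glueT -> exists i, y = glue_tree i.
Proof. by case/imsetP => i _ ->; exists i. Qed.

Lemma hole_sector (x : DS) (w : DS) : x \in H -> w \in H ->
  w \in porbit sS x -> w = x.
Proof.
move=> xH wH wo; case: HS => _ _ Hinj _.
by apply: Hinj => //; apply/eqP; rewrite eq_porbit_mem.
Qed.

(* Turning around the vertex of S at old_of (glue_tree i), the first dart of H
   met is hole_of (sP i), the one just before coming back. *)
Lemma sector_to_hole i : exists k, [/\ 0 < k,
    iter k sS (old_of (glue_tree i)) = hole_of (sP i)
  & forall j, j < k -> iter j sS (old_of (glue_tree i)) \notin H].
Proof.
set x0 := old_of (glue_tree i).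
set L := #|porbit sS x0|.
have Ex0 : sS (hole_of (sP i)) = x0 by rewrite /x0 old_of_tree_s.
have L0 : 0 < L by rewrite lt0n card_porbit_neq0.
have Lk : iter L.-1 sS x0 = hole_of (sP i).
  apply: (@perm_inj _ sS); rewrite Ex0 -iterS prednK //; exact: iter_porbit.
have L1 : 1 < L.
  rewrite ltn_neqAle L0 andbT; apply/negP => /eqP L1.
  by move: Lk; rewrite -L1 /= => E; move: (old_of_out (glue_tree i)); rewrite -/x0 E hole_of_mem.
have kL : L.-1 < L by rewrite prednK.
exists L.-1; split => //; first by rewrite -ltnS prednK.
move=> j jk; apply/negP => jH.
have : iter j sS x0 = iter L.-1 sS x0.
  rewrite Lk; apply: hole_sector => //; first exact: hole_of_mem.
  by rewrite -Lk porbit_sym porbit_iter porbit_sym porbit_iter porbit_id.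
by move/(iter_inj_lt (ltn_trans jk kL) kL) => E; move: jk; rewrite E ltnn.
Qed.

Lemma glue_first i : exists k, [/\ 0 < k, glue_tree (sP i) = iter k gMs (glue_tree i)
  & forall j, 0 < j < k -> iter j gMs (glue_tree i) \notin glueT].
Proof.
case: (sector_to_hole i) => k [k0 Lk notH].
set x0 := old_of (glue_tree i) in Lk notH.
have Hio j : j < k -> old_of (iter j gMs (glue_tree i)) = iter j sS x0.
  elim: j => [//|j IH] jk.
  rewrite iterS gMsE /gMs_f IH ?(ltn_trans (ltnSn j) jk) // -iterS.
  by rewrite lower_old ?notH // old_indexK // notH.
exists k; split => //.
  rewrite -(prednK k0) iterS gMsE /gMs_f Hio ?prednK // -iterS prednK //.
  by rewrite Lk lower_hole ?hole_of_mem // hole_ofK.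
move=> j /andP [j0 jk]; apply/negP => /glueT_as_tree [l El].
have : old_of (iter j gMs (glue_tree i)) = sS (hole_of (sP l)) by rewrite El old_of_tree_s.
rewrite Hio // -(prednK j0) iterS => /perm_inj E.
have : j.-1 < k by apply: leq_ltn_trans (leq_pred _) jk.
by move/notH; rewrite E hole_of_mem.
Qed.

Lemma glue_rel : cutrel gMs gMa glueT sP aP sS aS glue_tree old_of hole_of.
Proof.
split.
- exact: glue_tree_inj.
- move=> x; split; [by case/imsetP => i _ ->; exists i | by case=> i <-; apply: glue_tree_T].
- exact: old_of_inj.
- exact: hole_of_inj.
- by move=> y i; apply/eqP => E; move: (old_of_out y); rewrite E hole_of_mem.
- move=> z; case: (boolP (z \in H)) => zH.
    by right; exists (hole_index z); rewrite hole_indexK.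
  by left; exists (old_index z); rewrite old_indexK.
- by move=> i; rewrite gMaE /gMa_f old_of_tree aS2 lower_hole ?hole_of_mem // hole_ofK.
- exact: glue_first.
- move=> y yT; rewrite gMaE /gMa_f; case: (boolP (aS (old_of y) \in H)) => Hy.
    exfalso; move/negP: yT; apply; apply/imsetP.
    exists (aP (hole_index (aS (old_of y)))) => //; apply: old_of_inj.
    by rewrite old_of_tree aP2 hole_indexK // aS2.
  by rewrite lower_old // old_indexK.
- by move=> i; rewrite old_of_tree aS2.
- by move=> i; rewrite old_of_tree aP2.
- move=> y yT; rewrite gMsE /gMs_f; case: (boolP (sS (old_of y) \in H)) => Hy.
    by move: yT; rewrite gMsE /gMs_f lower_hole // glue_tree_T.
  by rewrite lower_old // old_indexK.
- move=> y i; rewrite gMsE /gMs_f; case: (boolP (sS (old_of y) \in H)) => Hy.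
    by rewrite lower_hole // => /glue_tree_inj <-; rewrite hole_indexK.
  rewrite lower_old // => E.
  have : sS (old_of y) = sS (hole_of (sP i)) by rewrite -old_of_tree_s -E old_indexK.
  by move/perm_inj => E'; move: (old_of_out y); rewrite E' hole_of_mem.
- by move=> i; rewrite old_of_tree_s permKV.
Qed.

End Glue.

Section Bijection.
Variables (e m : nat).
Hypothesis hm : 1 <= m.

Lemma i0_proof : 0 < 2 * m. Proof. lia. Qed.
Definition i0 : 'I_(2 * m) := Ordinal i0_proof.
Lemma y0_proof : 0 < 2 * (e + m). Proof. lia. Qed.
Definition y0 : 'I_(2 * (e + m)) := Ordinal y0_proof.

Definition fcut (X : tdmap (e + m)) : premap m * premap (e + 2 * m) :=
  (cutP i0 (tmap X) (tset X), cutS i0 (tmap X) (tset X)).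

Section CutValid.
Variable X : tdmap (e + m).
Hypothesis HX : valid_tdm m X.
Local Notation M := (tmap X).
Local Notation T := (tset X).

Lemma valid_map : is_map M. Proof. by case: HX. Qed.
Lemma valid_inv : invol_fpf (alpha M). Proof. by case: valid_map. Qed.
Lemma valid_Ta : forall x, x \in T -> alpha M x \in T. Proof. by case: HX => _ []. Qed.
Lemma valid_card : #|T| = 2 * m. Proof. by case: HX => _ []. Qed.
Lemma valid_root : Defs.root M \in T. Proof. by case: HX => _ []. Qed.

Definition cut_relX := cut_rel i0 valid_card valid_Ta valid_inv.

Lemma cutP_inv : invol_fpf (cP_a i0 M T). Proof. exact: invP_of_M cut_relX valid_inv. Qed.

Lemma cutP_connected : mconnected (cP_s i0 M T) (cP_a i0 M T).
Proof.
apply: (P_connected_of_T cut_relX) => x y xT yT.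
by rewrite -[tree_step _ _ _]/(tstep M T); case: HX => _ [_ _ -> //].
Qed.

Lemma cutP_verts : #|porbits (cP_s i0 M T)| = m.+1.
Proof.
rewrite (tree_vertices cut_relX); case: HX => _ [_ _ _ -> _].
by rewrite addn1.
Qed.

Lemma cutP_one_face : nfaces (cP_s i0 M T) (cP_a i0 M T) = 1.
Proof.
apply: (tree_one_face cutP_inv cutP_connected (k:=m)); last exact: cutP_verts.
by rewrite card_ord.
Qed.

Lemma cutP_contour : #|porbits (cP_a i0 M T * cP_s i0 M T)%g| = 1.
Proof. by rewrite nfaces_contour ?cutP_one_face //; exact: cutP_inv. Qed.

Lemma cutP_plane_tree : is_plane_tree (cutP i0 M T).
Proof.
split; last exact: cutP_one_face.
split; [exact: cutP_inv | exact: cutP_connected |].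
by rewrite /nverts cutP_verts cutP_one_face; lia.
Qed.

(* Euler's formula for S follows from that of M by the vertex/face counts. *)
Lemma cutS_euler : nverts (cS_s i0 M T) + nfaces (cS_s i0 M T) (cS_a i0 M T)
  = e + 2 * m + 2.
Proof.
case: valid_map => _ _ eM.
have V := vertex_count cut_relX; have F := faces_count cut_relX.
rewrite cutP_contour in F; rewrite card_ord in V.
have VT : #|[set porbit (sigma M) x | x in T]| = m + 1 by case: HX => _ [].
rewrite VT in V; move: eM; rewrite /nverts /nfaces in V F * => eM.
rewrite F; move: V eM.
move: #|porbits (cS_s i0 M T)| #|porbits (sigma M)|
  #|porbits (phi (sigma M) (alpha M))| => a b c; lia.
Qed.

Lemma cutS_simple : is_simple_boundary_map m (cutS i0 M T).
Proof.
have Hrf : root_face (cutS i0 M T) = hole_dart e (m:=m) @: setT.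
  exact: (hole_orbit cut_relX cutP_contour).
split.
- split; [exact: (invS_of_M cut_relX valid_inv) | | exact: cutS_euler].
  by apply: (connected_cut cut_relX) cutP_contour; case: valid_map.
- by rewrite Hrf card_imset ?cardsT ?card_ord //; exact: hole_dart_inj.
- rewrite Hrf => x y /imsetP [i _ ->] /imsetP [j _ ->] /= E.
  by rewrite (hole_simple cut_relX E).
- rewrite Hrf => x /imsetP [i _ ->]; apply/imsetP => -[j _] /=.
  rewrite (cr_aS3 cut_relX) => E.
  by move: (cr_disj cut_relX (tree_dart M T (cP_a i0 M T i)) j); rewrite E eqxx.
Qed.

Lemma cut_root : tree_dart M T (tree_index i0 T (Defs.root M)) = Defs.root M.
Proof. exact: (tree_indexK i0 M valid_card valid_root). Qed.

Lemma cutP_induced : induced_tree M T (cutP i0 M T).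
Proof.
exists (tree_dart M T); split.
- exact: tree_dart_inj valid_card.
- move=> x; exact: (cr_T cut_relX).
- exact: cut_root.
- exact: (cr_ha cut_relX).
- move=> i; case: (cr_first cut_relX i) => k [k0 Ek Hk]; exists k; split => //.
    by rewrite permX.
  by move=> j /Hk; rewrite permX.
Qed.

End CutValid.

Section GlueValid.
Variables (P : premap m) (S : premap (e + 2 * m)).
Hypothesis HP : is_plane_tree P.
Hypothesis HS : is_simple_boundary_map m S.

Let RG := glue_rel y0 HP HS.

Lemma glueP_verts : #|porbits (sigma P)| = m.+1.
Proof. by case: HP => -[_ _ E] F; move: E; rewrite /nverts F; lia. Qed.

Lemma glue_euler : nverts (gMs y0 P S) + nfaces (gMs y0 P S) (gMa y0 P S) = e + m + 2.
Proof.
have V := vertex_count RG; have F := faces_count RG.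
rewrite -(tree_vertices RG) glueP_verts (contour_one HP) card_ord in V F.
case: HS => -[_ _ eS] _ _ _.
rewrite /nverts /nfaces in eS F *; move: V F eS.
move: #|porbits (sigma S)| #|porbits (gMs y0 P S)| #|porbits (phi (sigma S) (alpha S))|
  #|porbits (phi (gMs y0 P S) (gMa y0 P S))| => a b c d; lia.
Qed.

Lemma glue_valid : valid_tdm m (glueX y0 P S).
Proof.
split.
  split; last exact: glue_euler.
  + apply: (invM_of_SP RG); [exact: aS_inv HS | exact: aP_inv HP].
  + by apply: (connected_glue RG); case: HS => -[].
split.
- by move=> x /(T_as_h RG) [i ->]; rewrite -(cr_ha RG); apply: (h_in_T RG).
- by rewrite /= card_imset ?cardsT ?card_ord //; exact: glue_tree_inj.
- move=> x y xT yT; rewrite -[tstep _ _]/(tree_step _ _ _).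
  by apply: (T_connected_of_P RG) => //; case: HP => -[].
- by rewrite /= -(tree_vertices RG) glueP_verts addn1.
- exact: (h_in_T RG).
Qed.

Lemma glue_cut_iso : iso_map (fcut (glueX y0 P S)).1 P /\ iso_map (fcut (glueX y0 P S)).2 S.
Proof.
have Egk : hole_of P S (Defs.root P) = Defs.root S.
  by rewrite /hole_of (orbit_match_iter (contour_len HP HS) 0).
exact: (functional (cut_relX glue_valid) RG (cut_root glue_valid) (erefl _) (erefl _) Egk).
Qed.

End GlueValid.

Lemma fcut_valid X : valid_tdm m X ->
  is_plane_tree (fcut X).1 /\ is_simple_boundary_map m (fcut X).2.
Proof. by move=> HX; split; [exact: cutP_plane_tree | exact: cutS_simple]. Qed.

(* Isomorphic decorated maps have isomorphic cuts: transport the cut relation. *)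
Lemma fcut_iso X Y : valid_tdm m X -> valid_tdm m Y -> iso_tdm X Y ->
  iso_map (fcut X).1 (fcut Y).1 /\ iso_map (fcut X).2 (fcut Y).2.
Proof.
move=> HX HY [p [ps pa pr pT]].
have R1 := transport (cut_relX HX) ps pa (fun x => pT x).
apply: (functional R1 (cut_relX HY) (rM := Defs.root (tmap Y))) => //.
  by rewrite cut_root // pr.
exact: cut_root.
Qed.

(* Cutting is injective on isomorphism classes: lift the isomorphisms. *)
Lemma fcut_inj X Y : valid_tdm m X -> valid_tdm m Y ->
  iso_map (fcut X).1 (fcut Y).1 -> iso_map (fcut X).2 (fcut Y).2 -> iso_tdm X Y.
Proof.
move=> HX HY [q [qs qa qr]] [r [rs ra rr]].
exists (lift_perm (cut_relX HX) (cut_relX HY) (cutP_contour HX) qs qa qr rs ra rr).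
split; [exact: lift_s | exact: lift_a | | by move=> x; rewrite lift_T].
by rewrite -{1}(cut_root HX) lift_h qr; exact: cut_root.
Qed.

(* Cutting is surjective on isomorphism classes: glue. *)
Lemma fcut_onto P S : is_plane_tree P -> is_simple_boundary_map m S ->
  exists X, [/\ valid_tdm m X, iso_map (fcut X).1 P & iso_map (fcut X).2 S].
Proof.
move=> HP HS; exists (glueX y0 P S).
by case: (glue_cut_iso HP HS) => I1 I2; split => //; exact: glue_valid.
Qed.

End Bijection.

Theorem theorem2 (e m : nat) (hm : 1 <= m) :
  exists f : tdmap (e + m) -> premap m * premap (e + 2 * m),
    [/\ (forall X, valid_tdm m X ->
           is_plane_tree (f X).1 /\ is_simple_boundary_map m (f X).2),
        (forall X Y, valid_tdm m X -> valid_tdm m Y -> iso_tdm X Y ->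
           iso_map (f X).1 (f Y).1 /\ iso_map (f X).2 (f Y).2),
        (forall X Y, valid_tdm m X -> valid_tdm m Y ->
           iso_map (f X).1 (f Y).1 -> iso_map (f X).2 (f Y).2 -> iso_tdm X Y),
        (forall P S, is_plane_tree P -> is_simple_boundary_map m S ->
           exists X, [/\ valid_tdm m X, iso_map (f X).1 P & iso_map (f X).2 S])
      & (forall X, valid_tdm m X -> induced_tree (tmap X) (tset X) (f X).1)].
Proof.
exists (fcut hm); split.
- exact: fcut_valid.
- exact: fcut_iso.
- exact: fcut_inj.
- exact: fcut_onto.
- exact: cutP_induced.
Qed.
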